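(* Let $X$ be an ultrahomogeneous chain and $G=\mathrm{Aut}(X)$. (1.1) For $G$ with the permutation topology $\tau_\partial$, $L\wedge R=\mathcal U^\partial$, and the Roelcke compactification of $(G,\tau_\partial)$ is the closure of $\imath(G)$ in $(\beta_\partial X)^X$. (1.2) For $G$ with the topology of pointwise convergence $\tau_p$, $R_{\mathcal K}=\mathcal U^p$, and the completion of $(G,\tau_p)$ with respect to $R_{\mathcal K}$ is the closure of $\imath(G)$ in $(\beta_pX)^X$. If moreover $X$ is a continuous ultrahomogeneous chain, then: (2.1) the Roelcke compactification of $(G,\tau_\partial)$ is the enveloping Ellis semigroup, i.e. the closure of $\jmath(G)$ in $(\beta_\partial X)^{\beta_\partial X}$; (2.2) the completion of $(G,\tau_p)$ with respect to $R_{\mathcal K}$ is the enveloping Ellis semigroup, i.e. the closure of $\jmath(G)$ in $(\beta_pX)^{\beta_pX}$.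
   Context: A chain is a linearly ordered set; $\mathrm{Aut}(X)$ its group of order-preserving bijections. $X$ is ultrahomogeneous if for every $n$ and all $x_1<\dots<x_n$, $y_1<\dots<y_n$ there is $g\in\mathrm{Aut}(X)$ with $g(x_k)=y_k$. $X$ is continuous if it has no proper gaps (every cut $(A,B)$ of $X$ with $A,B$ nonempty has a largest element of $A$ or a smallest element of $B$). $\tau$ is the order topology, $\tau_d$ the discrete topology on $X$. $\tau_p$ is the topology of pointwise convergence on $G$ w.r.t. $(X,\tau)$; $\tau_\partial$ is the permutation topology (identity neighbourhood base: pointwise stabilizers $\mathrm{St}_{x_1,\dots,x_n}$). $\mathcal U_X^p$ is the maximal equiuniformity on $(X,\tau)$ for $(G,\tau_p)$ and $\beta_pX$ the completion of $X$ with respect to it; $\mathcal U_X^\partial$ is the maximal equiuniformity on $(X,\tau_d)$ for $(G,\tau_\partial)$ (base: partitions $(\gets,x_1),\{x_1\},(x_1,x_2),\dots,\{x_n\},(x_n,\to)$) and $\beta_\partial X$ the completion with respect to it. For $*\in\{p,\partial\}$, $\mathcal U^*$ is the uniformity on $G$ with base the coverings $\{\{h\mid (g(x_k),h(x_k))\in\mathrm U,\ k\le n\}\mid g\in G\}$, $x_k\in X$, $\mathrm U$ an entourage of $\mathcal U^*_X$ (equivalently, the restriction to $\imath(G)$ of the product uniformity on $X^X$). $\imath(g)=(g(x))_{x\in X}$, $\jmath(g)=(g(x))_{x\in\beta_*X}$ using the continuous extension of $g$. $R_{\mathcal K}$ is the uniformity on $(G,\tau_p)$ with base the coverings $\{Og\,\mathrm{St}_{x_1,\dots,x_n}\mid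 g\in G\}$, $O$ a $\tau_p$-neighbourhood of the identity. $L\wedge R$ is the Roelcke uniformity (greatest lower bound of left and right uniformities); the Roelcke compactification is the completion with respect to it. *)

(* all topological / uniform notions are set up by hand on raw
   predicates, because several different uniformities/topologies live on the
   same carrier at once. *)
From Stdlib Require Import List Sorting.Sorted.
Import ListNotations.

Definition rel (T : Type) := T -> T -> Prop.
Definition unif (T : Type) := rel T -> Prop.
Definition topo (T : Type) := (T -> Prop) -> Prop.

Definition is_unif {T : Type} (U : unif T) : Prop :=
  U (fun _ _ => True) /\
  (forall E F : rel T, U E -> (forall a b, E a b -> F a b) -> U F) /\
  (forall E F : rel T, U E -> U F -> U (fun a b => E a b /\ F a b)) /\
  (forall E, U E -> forall a, E a a) /\
  (forall E, U E -> U (fun a b => E b a)) /\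
  (forall E, U E -> exists F, U F /\ forall a b c, F a b -> F b c -> E a c).

Definition subunif {T : Type} (W U : unif T) : Prop := forall E, W E -> U E.

Definition same_unif {T : Type} (U V : unif T) : Prop := forall E, U E <-> V E.

(* greatest lower bound U1 /\ U2 in the lattice of uniformities: the union of
   all uniformities coarser than both (this family is directed, so its union is
   a uniformity and is the greatest lower bound). *)
Definition meet_unif {T : Type} (U1 U2 : unif T) : unif T :=
  fun E => exists W, is_unif W /\ subunif W U1 /\ subunif W U2 /\ W E.

Definition unif_open {T : Type} (U : unif T) (A : T -> Prop) : Prop :=
  forall a, A a -> exists E, U E /\ forall b, E a b -> A b.

Definition separated {T : Type} (U : unif T) : Prop :=
  forall a b, (forall E, U E -> E a b) -> a = b.

Definition is_filter {T : Type} (F : (T -> Prop) -> Prop) : Prop :=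
  F (fun _ => True) /\ ~ F (fun _ => False) /\
  (forall A B : T -> Prop, F A -> (forall x, A x -> B x) -> F B) /\
  (forall A B, F A -> F B -> F (fun x => A x /\ B x)).

Definition cauchy {T : Type} (U : unif T) (F : (T -> Prop) -> Prop) : Prop :=
  forall E, U E -> exists A, F A /\ forall a b, A a -> A b -> E a b.

Definition converges_to {T : Type} (U : unif T) (F : (T -> Prop) -> Prop) (t : T) : Prop :=
  forall E, U E -> F (E t).

Definition complete {T : Type} (U : unif T) : Prop :=
  forall F, is_filter F -> cauchy U F -> exists t, converges_to U F t.

Definition unif_embedding {S Z : Type} (W : unif S) (UZ : unif Z) (iota : S -> Z) : Prop :=
  (forall a b, iota a = iota b -> a = b) /\
  (forall E, W E <-> exists F, UZ F /\ forall a b, F (iota a) (iota b) -> E a b).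

Definition dense_image {S Z : Type} (UZ : unif Z) (iota : S -> Z) : Prop :=
  forall z E, UZ E -> exists s, E z (iota s).

Definition is_completion {X B : Type} (U : unif X) (UB : unif B) (e : X -> B) : Prop :=
  is_unif UB /\ separated UB /\ complete UB /\ unif_embedding U UB e /\ dense_image UB e.

(* "the completion of (S,W) is the closure of iota(S) in (Z,UZ)":
   Z is a complete Hausdorff uniform space and iota is a uniform embedding,
   so that the closure of iota(S), with iota, is the completion of (S,W). *)
Definition completion_is_closure {S Z : Type} (W : unif S) (UZ : unif Z) (iota : S -> Z) : Prop :=
  is_unif UZ /\ separated UZ /\ complete UZ /\ unif_embedding W UZ iota.

Definition prod_unif {I B : Type} (UB : unif B) : unif (I -> B) :=
  fun E => exists (is : list I) (F : rel B), UB F /\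
    forall f f' : I -> B, (forall i, In i is -> F (f i) (f' i)) -> E f f'.

Definition is_chain {X : Type} (lt : rel X) : Prop :=
  (forall x, ~ lt x x) /\
  (forall x y z, lt x y -> lt y z -> lt x z) /\
  (forall x y, lt x y \/ x = y \/ lt y x).

Definition is_aut {X : Type} (lt : rel X) (g : X -> X) : Prop :=
  (forall x y, g x = g y -> x = y) /\ (forall y, exists x, g x = y) /\
  (forall x y, lt x y <-> lt (g x) (g y)).

Definition Aut {X : Type} (lt : rel X) := {g : X -> X | is_aut lt g}.

Definition ap {X : Type} {lt : rel X} (g : Aut lt) : X -> X := proj1_sig g.

Definition ultrahomogeneous {X : Type} (lt : rel X) : Prop :=
  forall xs ys : list X, length xs = length ys ->
    StronglySorted lt xs -> StronglySorted lt ys ->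
    exists g : Aut lt, map (ap g) xs = ys.

Definition continuous_chain {X : Type} (lt : rel X) : Prop :=
  forall A B : X -> Prop, (exists a, A a) -> (exists b, B b) ->
    (forall x, A x \/ B x) -> (forall a b, A a -> B b -> lt a b) ->
    (exists m, A m /\ forall a, A a -> a = m \/ lt a m) \/
    (exists m, B m /\ forall b, B b -> b = m \/ lt m b).

Definition order_basic {X : Type} (lt : rel X) (V : X -> Prop) : Prop :=
  (forall x, V x) \/
  (exists b, forall x, V x <-> lt x b) \/
  (exists a, forall x, V x <-> lt a x) \/
  (exists a b, forall x, V x <-> (lt a x /\ lt x b)).

Definition order_top {X : Type} (lt : rel X) : topo X :=
  fun U => forall x, U x -> exists V, order_basic lt V /\ V x /\ forall y, V y -> U y.

Definition ptop {X : Type} (lt : rel X) : topo (Aut lt) :=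
  fun U => forall g, U g -> exists l : list (X * (X -> Prop)),
    (forall p, In p l -> order_top lt (snd p) /\ snd p (ap g (fst p))) /\
    (forall h, (forall p, In p l -> snd p (ap h (fst p))) -> U h).

Definition perm_top {X : Type} (lt : rel X) : topo (Aut lt) :=
  fun U => forall g, U g -> exists xs : list X,
    forall h, (forall x, In x xs -> ap h x = ap g x) -> U h.

Definition nbhd_id {X : Type} {lt : rel X} (tau : topo (Aut lt)) (O : Aut lt -> Prop) : Prop :=
  exists V, tau V /\ (forall g : Aut lt, (forall x, ap g x = x) -> V g) /\
            (forall g, V g -> O g).

(* left uniformity: (g,h) with g^-1 h in O ;  right: h g^-1 in O *)
Definition left_unif {X : Type} {lt : rel X} (tau : topo (Aut lt)) : unif (Aut lt) :=
  fun E => exists O, nbhd_id tau O /\ forall g h : Aut lt,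
    (exists o, O o /\ forall x, ap h x = ap g (ap o x)) -> E g h.

Definition right_unif {X : Type} {lt : rel X} (tau : topo (Aut lt)) : unif (Aut lt) :=
  fun E => exists O, nbhd_id tau O /\ forall g h : Aut lt,
    (exists o, O o /\ forall x, ap h x = ap o (ap g x)) -> E g h.

Definition roelcke_unif {X : Type} {lt : rel X} (tau : topo (Aut lt)) : unif (Aut lt) :=
  meet_unif (left_unif tau) (right_unif tau).

(* R_K: base coverings { O g St_xs | g in G } *)
Definition in_OgSt {X : Type} {lt : rel X} (O : Aut lt -> Prop) (g : Aut lt)
  (xs : list X) (h : Aut lt) : Prop :=
  exists o s : Aut lt, O o /\ (forall x, In x xs -> ap s x = x) /\
    forall x, ap h x = ap o (ap g (ap s x)).

Definition RK {X : Type} (lt : rel X) : unif (Aut lt) :=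
  fun E => exists O xs, nbhd_id (ptop lt) O /\ forall h1 h2,
    (exists g, in_OgSt O g xs h1 /\ in_OgSt O g xs h2) -> E h1 h2.

(* U_X^partial: base = partitions (<-,x1),{x1},(x1,x2),...,{xn},(xn,->) *)
Definition same_block {X : Type} (lt : rel X) (xs : list X) (a b : X) : Prop :=
  forall x, In x xs -> (a = x <-> b = x) /\ (lt a x <-> lt b x).

Definition UXd {X : Type} (lt : rel X) : unif X :=
  fun E => exists xs, forall a b, same_block lt xs a b -> E a b.

Definition UG {X : Type} (lt : rel X) (UX : unif X) : unif (Aut lt) :=
  fun E => exists (xs : list X) (F : rel X), UX F /\ forall h1 h2 : Aut lt,
    (exists g : Aut lt, forall x, In x xs -> F (ap g x) (ap h1 x) /\ F (ap g x) (ap h2 x))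
    -> E h1 h2.

Definition is_equiunif {X : Type} (lt : rel X) (tauX : topo X) (tauG : topo (Aut lt))
  (U : unif X) : Prop :=
  is_unif U /\
  (forall A, tauX A <-> unif_open U A) /\
  (forall (g : Aut lt) E, U E -> U (fun x y => E (ap g x) (ap g y))) /\
  (forall E, U E -> exists O, nbhd_id tauG O /\ forall g x, O g -> E x (ap g x)).

Definition max_equiunif {X : Type} (lt : rel X) (tauX : topo X) (tauG : topo (Aut lt))
  (U : unif X) : Prop :=
  is_equiunif lt tauX tauG U /\
  forall V, is_equiunif lt tauX tauG V -> subunif V U.

Definition ext_ok {X B : Type} (lt : rel X) (UB : unif B) (e : X -> B)
  (ext : Aut lt -> B -> B) : Prop :=
  forall g : Aut lt, (forall x, ext g (e x) = e (ap g x)) /\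
    (forall A, unif_open UB A -> unif_open UB (fun b => A (ext g b))).

From Stdlib Require Import List Sorting.Sorted Classical ClassicalEpsilon FunctionalExtensionality.
Import ListNotations.

(* Ultrahomogeneity says that every finite order-preserving partial map extends to an
   automorphism.  With it, an entourage of the Roelcke uniformity of (G, tau_d), resp. of R_K
   on (G, tau_p), turns out to be exactly one that controls (g x, h x), for x in a finite set,
   by an entourage of U^d_X, resp. of U^p_X; and U^p_X is the uniformity generated by the sets
   {(x, o x) | o in O}, O an identity neighbourhood of tau_p.  So G embeds uniformly into the
   complete space (beta X)^X, and its completion is the closure of the image.
   For the enveloping semigroup one needs moreover that g |-> g~(b) is uniformly continuous for
   every b in beta X.  In a continuous chain each b is a point of X, a one-sided limit at a point
   of X, or a limit at an end of X, and then g~(b) is controlled by the values of g at finitely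
   many points; U^p_X induces the order topology, so for it the one-sided limits at points of X
   are those points themselves. *)

Lemma choice_on {A B : Type} (P : A -> B -> Prop) (Q : A -> Prop) (b0 : A -> B) :
  (forall a, Q a -> exists b, P a b) -> exists f : A -> B, forall a, Q a -> P a (f a).
Proof.
  intros H. apply (choice (fun a b => Q a -> P a b)). intros a.
  destruct (classic (Q a)) as [qa|nqa].
  - destruct (H a qa) as [b hb]. exists b; auto.
  - exists (b0 a); tauto.
Qed.

Lemma StronglySorted_impl_in {A} (R R' : A -> A -> Prop) (L : list A) :
  (forall a b, In a L -> In b L -> R a b -> R' a b) -> StronglySorted R L -> StronglySorted R' L.
Proof.
  induction L as [|a L IH]; intros HR HS; constructor; inversion HS; subst.
  - apply IH; auto. intros; apply HR; simpl; auto.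
  - rewrite Forall_forall in *. intros b hb. apply HR; simpl; auto.
Qed.

Lemma StronglySorted_map {A B} (f : A -> B) (R : B -> B -> Prop) (L : list A) :
  StronglySorted (fun a b => R (f a) (f b)) L -> StronglySorted R (map f L).
Proof.
  induction L as [|a L IH]; intros HS; simpl; constructor; inversion HS; subst; auto.
  rewrite Forall_forall in *. intros y hy. apply in_map_iff in hy. destruct hy as [b [<- hb]]. auto.
Qed.

(** * Uniform spaces *)

Lemma same_unif_sym {T} (U V : unif T) : same_unif U V -> same_unif V U.
Proof. intros h E. symmetry. apply h. Qed.

Lemma same_unif_trans {T} (U V W : unif T) : same_unif U V -> same_unif V W -> same_unif U W.
Proof. intros h h' E. rewrite (h E). apply h'. Qed.

Lemma map_fst_eq_snd {A} (g : A -> A) (L : list (A * A)) :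
  map g (map fst L) = map snd L -> forall q, In q L -> g (fst q) = snd q.
Proof.
  induction L as [|a L IH]; simpl; intros H q hq; [contradiction|].
  injection H; intros. destruct hq as [->|hq]; auto.
Qed.

Section UniformSpace.
Variable T : Type.
Variable U : unif T.
Hypothesis HU : is_unif U.

Lemma unif_full : U (fun _ _ => True).
Proof. destruct HU as [h _]. exact h. Qed.
Lemma unif_sup (E F : rel T) : U E -> (forall a b, E a b -> F a b) -> U F.
Proof. destruct HU as [_ [h _]]. apply h. Qed.
Lemma unif_cap (E F : rel T) : U E -> U F -> U (fun a b => E a b /\ F a b).
Proof. destruct HU as [_ [_ [h _]]]. apply h. Qed.
Lemma unif_refl E : U E -> forall a, E a a.
Proof. destruct HU as [_ [_ [_ [h _]]]]. apply h. Qed.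
Lemma unif_inv E : U E -> U (fun a b => E b a).
Proof. destruct HU as [_ [_ [_ [_ [h _]]]]]. apply h. Qed.
Lemma unif_half E : U E -> exists F, U F /\ forall a b c, F a b -> F b c -> E a c.
Proof. destruct HU as [_ [_ [_ [_ [_ h]]]]]. apply h. Qed.

Lemma unif_sym_half E : U E -> exists F, U F /\ (forall a b, F a b -> F b a) /\
  (forall a b c, F a b -> F b c -> E a c).
Proof.
  intros hE. destruct (unif_half E hE) as [G [hG hc]].
  exists (fun a b => G a b /\ G b a). split; [|split].
  - apply unif_cap; auto. apply unif_inv; auto.
  - tauto.
  - intros a b c [h1 _] [h2 _]. eauto.
Qed.

Lemma unif_sym_third E : U E -> exists F, U F /\ (forall a b, F a b -> F b a) /\
  (forall a b c d, F a b -> F b c -> F c d -> E a d).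
Proof.
  intros hE. destruct (unif_sym_half E hE) as [G [hG [sG cG]]].
  destruct (unif_sym_half G hG) as [H [hH [sH cH]]].
  exists (fun a b => H a b /\ G a b). split; [|split].
  - apply unif_cap; auto.
  - intros a b [h1 h2]; split; auto.
  - intros a b c d [h1 _] [h2 _] [_ h3]. apply (cG a c d); eauto.
Qed.

Lemma unif_forall_in {I} (l : list I) (P : I -> rel T) :
  (forall i, In i l -> U (P i)) -> U (fun a b => forall i, In i l -> P i a b).
Proof.
  induction l as [|i l IH]; intros H.
  - eapply unif_sup; [apply unif_full|]. simpl; tauto.
  - eapply unif_sup.
    + apply (unif_cap (P i)); [apply H; simpl; auto|apply IH; intros; apply H; simpl; auto].
    + simpl. intros a b [h1 h2] j [<-|hj]; auto.
Qed.

Lemma unif_ball_interior x F : U F ->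
  unif_open U (fun y => exists G, U G /\ forall y', G y y' -> F x y').
Proof.
  intros hF d [G [hG hd]]. destruct (unif_half G hG) as [G' [hG' cG]].
  exists G'. split; auto. intros d2 h2. exists G'. split; auto. intros d3 h3. apply hd. eauto.
Qed.

Lemma continuous_unif_ball (f : T -> T) :
  (forall A, unif_open U A -> unif_open U (fun b => A (f b))) ->
  forall b F, U F -> exists F', U F' /\ forall c, F' b c -> F (f b) (f c).
Proof.
  intros Hf b F hF.
  destruct (Hf _ (unif_ball_interior (f b) F hF) b) as [F' [hF' H']]; [exists F; split; auto|].
  exists F'. split; auto. intros c hc. destruct (H' c hc) as [G [hG hG']].
  apply hG', (unif_refl G hG).
Qed.

End UniformSpace.

Lemma filter_forall_in {T I} (F : (T -> Prop) -> Prop) (l : list I) (P : I -> T -> Prop) :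
  is_filter F -> (forall i, In i l -> F (P i)) -> F (fun a => forall i, In i l -> P i a).
Proof.
  intros [Htop [_ [Hup Hcap]]]. induction l as [|i l IH]; intros H.
  - eapply Hup; [exact Htop|]. simpl; tauto.
  - eapply Hup; [apply Hcap; [apply (H i); simpl; auto|apply IH; intros; apply H; simpl; auto]|].
    simpl. intros a [h1 h2] j [<-|hj]; auto.
Qed.

Section Product.
Variable I B : Type.
Variable UB : unif B.
Hypothesis HUB : is_unif UB.

Lemma prod_is_unif : is_unif (@prod_unif I B UB).
Proof.
  unfold prod_unif. split; [|split; [|split; [|split; [|split]]]].
  - exists [], (fun _ _ => True). split; [apply unif_full|]; auto.
  - intros E F [is [F0 [h1 h2]]] hEF. exists is, F0. split; auto.
  - intros E F [is [F0 [h1 h2]]] [is' [F0' [h1' h2']]].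
    exists (is ++ is'), (fun a b => F0 a b /\ F0' a b). split; [apply unif_cap; auto|].
    intros f f' h. split; [apply h2|apply h2']; intros i hi; apply h; apply in_or_app; auto.
  - intros E [is [F0 [h1 h2]]] a. apply h2. intros; apply (unif_refl _ UB HUB); auto.
  - intros E [is [F0 [h1 h2]]]. exists is, (fun a b => F0 b a).
    split; [exact (unif_inv _ UB HUB F0 h1)|auto].
  - intros E [is [F0 [h1 h2]]]. destruct (unif_half _ UB HUB F0 h1) as [G [hG cG]].
    exists (fun f f' => forall i, In i is -> G (f i) (f' i)). split.
    + exists is, G. split; auto.
    + intros a b c hab hbc. apply h2. intros i hi. eauto.
Qed.

Lemma prod_separated : separated UB -> separated (@prod_unif I B UB).
Proof.
  intros Hs f f' H. apply functional_extensionality. intros i. apply Hs. intros E hE.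
  apply (H (fun g g' => E (g i) (g' i))). exists [i], E. split; auto.
  intros g g' h. apply h. simpl; auto.
Qed.

Lemma prod_complete : complete UB -> complete (@prod_unif I B UB).
Proof.
  intros Hc F HF Hcy.
  assert (Hi : forall i, exists t, converges_to UB (fun A => F (fun f => A (f i))) t).
  { intros i. destruct HF as [f1 [f2 [f3 f4]]]. apply Hc.
    - split; [|split; [|split]].
      + eapply f3; [exact f1|]. auto.
      + intros h. apply f2. eapply f3; [exact h|]. auto.
      + intros A A' h hA. eapply f3; [exact h|]. simpl; auto.
      + intros A A' h h'. apply f4; auto.
    - intros E hE. destruct (Hcy (fun f f' => E (f i) (f' i))) as [A [hA hA']].
      { exists [i], E. split; auto. intros f f' h; apply h; simpl; auto. }
      exists (fun b => exists f, A f /\ f i = b). split.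
      + eapply f3; [exact hA|]. intros f hf. exists f; auto.
      + intros a b [f [hf <-]] [f' [hf' <-]]. auto. }
  destruct (choice _ Hi) as [lim hlim].
  exists lim. intros E [is [F0 [h1 h2]]].
  eapply (proj1 (proj2 (proj2 HF))).
  - apply (filter_forall_in F is (fun i f => F0 (lim i) (f i)) HF).
    intros i _. exact (hlim i F0 h1).
  - intros f hf. apply h2. auto.
Qed.

End Product.

Section Completion.
Variable Y B : Type.
Variable U : unif Y.
Variable UB : unif B.
Variable e : Y -> B.
Hypothesis Hc : is_completion U UB e.

Lemma completion_unif : is_unif UB.
Proof. apply Hc. Qed.
Lemma completion_separated : separated UB.
Proof. apply Hc. Qed.
Lemma completion_complete : complete UB.
Proof. apply Hc. Qed.
Lemma completion_inj a b : e a = e b -> a = b.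
Proof. destruct Hc as [_ [_ [_ [[h _] _]]]]. apply h. Qed.
Lemma completion_embedding E : U E <-> exists F, UB F /\ forall a b, F (e a) (e b) -> E a b.
Proof. destruct Hc as [_ [_ [_ [[_ h] _]]]]. apply h. Qed.
Lemma completion_dense z E : UB E -> exists s, E z (e s).
Proof. destruct Hc as [_ [_ [_ [_ h]]]]. apply h. Qed.

Lemma completion_pullback F : UB F -> U (fun a b => F (e a) (e b)).
Proof. intros h. apply completion_embedding. exists F; auto. Qed.

Lemma completion_prod_closure (I : Type) :
  is_unif (@prod_unif I B UB) /\ separated (@prod_unif I B UB) /\ complete (@prod_unif I B UB).
Proof.
  split; [|split].
  - apply prod_is_unif, completion_unif.
  - apply prod_separated, completion_separated.
  - exact (prod_complete I B UB completion_complete).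
Qed.

Variable phi : Y -> Y.
Hypothesis Hphi : forall E, U E -> U (fun x y => E (phi x) (phi y)).

Lemma uniform_map_limit b : exists c, forall E, UB E -> exists F, UB F /\
  forall y, F b (e y) -> E c (e (phi y)).
Proof.
  pose proof completion_unif as HB.
  destruct (completion_complete
              (fun A => exists F, UB F /\ forall y, F b (e y) -> A (e (phi y)))) as [c hc].
  - split; [|split; [|split]].
    + exists (fun _ _ => True). split; auto. apply unif_full; auto.
    + intros [F [hF h]]. destruct (completion_dense b F hF) as [s hs]. exact (h s hs).
    + intros A A' [F [hF h]] hA. exists F; split; auto.
    + intros A A' [F [hF h]] [F' [hF' h']]. exists (fun a b => F a b /\ F' a b).
      split; [apply unif_cap; auto|]. intros y [h1 h2]; auto.
  - intros E hE.
    assert (hP : U (fun a c => E (e (phi a)) (e (phi c))))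
      by (apply (Hphi (fun a c => E (e a) (e c))), completion_pullback; auto).
    apply completion_embedding in hP. destruct hP as [F [hF hF']].
    destruct (unif_sym_half _ _ HB F hF) as [F1 [hF1 [s1 c1]]].
    exists (fun z => exists y, F1 b (e y) /\ z = e (phi y)). split.
    + exists F1. split; auto. intros y hy. exists y; auto.
    + intros a a' [y [hy ->]] [y' [hy' ->]]. apply hF'. eapply c1; [apply s1; exact hy|exact hy'].
  - exists c. exact hc.
Qed.

Lemma uniform_map_extends : exists psi : B -> B, (forall x, psi (e x) = e (phi x)) /\
  (forall A, unif_open UB A -> unif_open UB (fun b => A (psi b))).
Proof.
  pose proof completion_unif as HB.
  destruct (choice _ uniform_map_limit) as [psi hpsi].
  exists psi. split.
  - intros x. apply completion_separated. intros E hE. destruct (hpsi (e x) E hE) as [F [hF h]].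
    apply h, (unif_refl _ _ HB F hF).
  - intros A hA b hb. destruct (hA (psi b) hb) as [E [hE hE']].
    destruct (unif_sym_half _ _ HB E hE) as [E1 [hE1 [s1 c1]]].
    destruct (hpsi b E1 hE1) as [Fb [hFb hFbP]].
    destruct (unif_half _ _ HB Fb hFb) as [F [hF cF]].
    exists F. split; auto. intros b' hbb'.
    destruct (hpsi b' E1 hE1) as [Fb' [hFb' hFb'']].
    destruct (completion_dense b' (fun a c => F a c /\ Fb' a c)) as [y [hy1 hy2]];
      [apply unif_cap; auto|].
    apply hE'. eapply c1; [apply hFbP; eapply cF; eauto|]. apply s1, hFb''. auto.
Qed.

End Completion.

Lemma completion_source_unif {Y B : Type} (U : unif Y) (UB : unif B) (e : Y -> B) :
  is_completion U UB e -> is_unif U.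
Proof.
  intros Hc. pose proof (completion_unif _ _ _ _ _ Hc) as HB.
  assert (HU : forall E, U E <-> exists F, UB F /\ forall a b, F (e a) (e b) -> E a b)
    by apply (completion_embedding _ _ _ _ _ Hc).
  split; [|split; [|split; [|split; [|split]]]]; setoid_rewrite HU.
  - exists (fun _ _ => True). split; [apply unif_full|]; auto.
  - intros E F [F0 [h0 h]] hEF. eauto.
  - intros E F [F0 [h0 h]] [F1 [h1 h']]. exists (fun a b => F0 a b /\ F1 a b).
    split; [apply unif_cap|intros a b []]; auto.
  - intros E [F0 [h0 h]] a. apply h, (unif_refl _ _ HB F0 h0).
  - intros E [F0 [h0 h]]. exists (fun a b => F0 b a). split; [exact (unif_inv _ _ HB F0 h0)|auto].
  - intros E [F0 [h0 h]]. destruct (unif_half _ _ HB F0 h0) as [F1 [h1 c1]].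
    exists (fun a b => F1 (e a) (e b)). split; [|eauto].
    exists F1. split; auto.
Qed.

(** * Chains and their automorphisms *)

Section Chain.
Variable X : Type.
Variable lt : rel X.
Hypothesis Hch : is_chain lt.
Hypothesis Hu : ultrahomogeneous lt.

Lemma lt_irrefl x : ~ lt x x.
Proof. apply Hch. Qed.
Lemma lt_trans x y z : lt x y -> lt y z -> lt x z.
Proof. apply Hch. Qed.
Lemma lt_total x y : lt x y \/ x = y \/ lt y x.
Proof. apply Hch. Qed.
Lemma lt_asym x y : lt x y -> lt y x -> False.
Proof. intros; apply (lt_irrefl x); eapply lt_trans; eauto. Qed.
Lemma not_lt_le a b : ~ lt a b -> b = a \/ lt b a.
Proof. intros h. destruct (lt_total a b) as [?|[?|?]]; auto; contradiction. Qed.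
Lemma le_lt_trans a b c : a = b \/ lt a b -> lt b c -> lt a c.
Proof. intros [<-|h] h'; auto. eapply lt_trans; eauto. Qed.
Lemma lt_le_trans a b c : lt a b -> b = c \/ lt b c -> lt a c.
Proof. intros h [<-|h']; auto. eapply lt_trans; eauto. Qed.

Lemma ap_inj (g : Aut lt) x y : ap g x = ap g y -> x = y.
Proof. apply (proj2_sig g). Qed.
Lemma ap_surj (g : Aut lt) y : exists x, ap g x = y.
Proof. apply (proj2_sig g). Qed.
Lemma ap_lt (g : Aut lt) x y : lt x y <-> lt (ap g x) (ap g y).
Proof. apply (proj2_sig g). Qed.

Lemma aut_ext (g h : Aut lt) : (forall x, ap g x = ap h x) -> g = h.
Proof.
  destruct g as [g pg], h as [h ph]; unfold ap; simpl; intros H.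
  assert (g = h) by (apply functional_extensionality; auto). subst.
  f_equal. apply proof_irrelevance.
Qed.

Lemma id_is_aut : is_aut lt (fun x => x).
Proof. split; [|split]; intros; eauto; tauto. Qed.
Definition id_aut : Aut lt := exist _ _ id_is_aut.

Lemma comp_is_aut (g h : Aut lt) : is_aut lt (fun x => ap g (ap h x)).
Proof.
  split; [|split].
  - intros x y e. apply ap_inj in e. apply ap_inj in e. auto.
  - intros y. destruct (ap_surj g y) as [z <-]. destruct (ap_surj h z) as [x <-]. eauto.
  - intros x y. rewrite (ap_lt h), (ap_lt g). tauto.
Qed.
Definition comp_aut (g h : Aut lt) : Aut lt := exist _ _ (comp_is_aut g h).

Definition inv_fn (g : Aut lt) (y : X) : X :=
  proj1_sig (constructive_indefinite_description _ (ap_surj g y)).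
Lemma ap_inv_fn (g : Aut lt) y : ap g (inv_fn g y) = y.
Proof. exact (proj2_sig (constructive_indefinite_description _ (ap_surj g y))). Qed.
Lemma inv_fn_ap (g : Aut lt) x : inv_fn g (ap g x) = x.
Proof. apply (ap_inj g), ap_inv_fn. Qed.

Lemma inv_is_aut (g : Aut lt) : is_aut lt (inv_fn g).
Proof.
  split; [|split].
  - intros x y e. rewrite <- (ap_inv_fn g x), <- (ap_inv_fn g y), e. auto.
  - intros y. exists (ap g y). apply inv_fn_ap.
  - intros x y. rewrite (ap_lt g (inv_fn g x) (inv_fn g y)), !ap_inv_fn. tauto.
Qed.
Definition inv_aut (g : Aut lt) : Aut lt := exist _ _ (inv_is_aut g).

Lemma ap_comp (g h : Aut lt) x : ap (comp_aut g h) x = ap g (ap h x).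
Proof. reflexivity. Qed.
Lemma ap_inv (g : Aut lt) x : ap (inv_aut g) x = inv_fn g x.
Proof. reflexivity. Qed.

Lemma lt_ap_inv_fn (g : Aut lt) x y : lt (ap g x) y <-> lt x (inv_fn g y).
Proof. rewrite (ap_lt g x (inv_fn g y)), ap_inv_fn. tauto. Qed.
Lemma lt_inv_fn_ap (g : Aut lt) x y : lt y (ap g x) <-> lt (inv_fn g y) x.
Proof. rewrite (ap_lt g (inv_fn g y) x), ap_inv_fn. tauto. Qed.

Definition nontrivial := exists a b, lt a b.

Lemma trivial_aut_unique : ~ nontrivial -> forall g h : Aut lt, g = h.
Proof.
  intros H g h. apply aut_ext. intros x.
  destruct (lt_total (ap g x) (ap h x)) as [l|[l|l]]; auto; exfalso; apply H; do 2 eexists; eauto.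
Qed.

Lemma lt_iff_of_mono a b a' b' :
  (lt a b -> lt a' b') -> (lt b a -> lt b' a') -> (a = b -> a' = b') ->
  (lt a b <-> lt a' b') /\ (lt b a <-> lt b' a').
Proof.
  intros h1 h2 h3. split; split; auto; intros h.
  - destruct (lt_total a b) as [h'|[h'|h']]; auto; exfalso.
    + rewrite (h3 h') in h. eapply lt_irrefl; eauto.
    + eapply lt_asym; [exact h|auto].
  - destruct (lt_total b a) as [h'|[h'|h']]; auto; exfalso.
    + rewrite (h3 (eq_sym h')) in h. eapply lt_irrefl; eauto.
    + eapply lt_asym; [exact h|auto].
Qed.

(** * Extending finite partial isomorphisms *)

Definition consistent (ps : list (X * X)) : Prop :=
  forall p q, In p ps -> In q ps -> (lt (fst p) (fst q) <-> lt (snd p) (snd q)).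

Let lt_fst (a b : X * X) := lt (fst a) (fst b).

Lemma consistent_fst_eq (a b : X * X) : (lt (fst a) (fst b) <-> lt (snd a) (snd b)) ->
  (lt (fst b) (fst a) <-> lt (snd b) (snd a)) -> fst a = fst b -> a = b.
Proof.
  destruct a as [a1 a2], b as [b1 b2]; simpl; intros h1 h2 e; subst.
  destruct (lt_total a2 b2) as [h|[h|h]].
  - exfalso. apply h1 in h. eapply lt_irrefl; eauto.
  - subst; auto.
  - exfalso. apply h2 in h. eapply lt_irrefl; eauto.
Qed.

Lemma sorted_insert (a : X * X) (L : list (X * X)) :
  StronglySorted lt_fst L -> consistent (a :: L) ->
  exists L', StronglySorted lt_fst L' /\ forall q, In q L' <-> (q = a \/ In q L).
Proof.
  induction L as [|b L IH]; intros HS HC.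
  - exists [a]. split; [repeat constructor|]. intros q; simpl; split; intros [h|h]; auto.
  - inversion HS as [|? ? HS' HF]; subst.
    destruct (lt_total (fst a) (fst b)) as [h|[h|h]].
    + exists (a :: b :: L). split.
      * constructor; auto. constructor; auto. rewrite Forall_forall in *.
        intros y hy. unfold lt_fst in *. eapply lt_trans; eauto.
      * intros q; simpl; split; intros [h1|[h1|h1]]; auto.
    + assert (a = b) by (apply consistent_fst_eq; try apply HC; simpl; auto).
      subst. exists (b :: L). split; auto. intros q; simpl; split; [tauto|]. intros [->|h2]; tauto.
    + destruct (IH HS') as [L' [HS'' HL']].
      { intros p q hp hq. apply HC; simpl in *; intuition. }
      exists (b :: L'). split.
      * constructor; auto. rewrite Forall_forall in *. intros y hy.
        apply HL' in hy. destruct hy as [->|hy]; auto.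
      * intros q. simpl. rewrite HL'. tauto.
Qed.

Lemma sorted_enumeration (ps : list (X * X)) : consistent ps ->
  exists L, StronglySorted lt_fst L /\ forall q, In q L <-> In q ps.
Proof.
  induction ps as [|a ps IH]; intros HC.
  - exists []. split; [constructor|tauto].
  - destruct IH as [L [HS HL]]; [intros p q hp hq; apply HC; simpl; auto|].
    destruct (sorted_insert a L HS) as [L' [HS' HL']].
    { intros p q hp hq. apply HC; simpl in *.
      - destruct hp as [->|hp]; [auto|right; apply HL; auto].
      - destruct hq as [->|hq]; [auto|right; apply HL; auto]. }
    exists L'. split; auto. intros q. rewrite HL'. simpl. rewrite HL. split; intros [h|h]; auto.
Qed.

Lemma partial_iso_extends (ps : list (X * X)) : consistent ps ->
  exists g : Aut lt, forall p, In p ps -> ap g (fst p) = snd p.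
Proof.
  intros HC. destruct (sorted_enumeration ps HC) as [L [HS HL]].
  destruct (Hu (map fst L) (map snd L)) as [g Hg].
  - rewrite !length_map; auto.
  - apply StronglySorted_map. exact HS.
  - apply StronglySorted_map. eapply StronglySorted_impl_in; [|exact HS].
    intros a b ha hb h. apply (HC a b); try apply HL; auto.
  - exists g. intros p hp. apply (map_fst_eq_snd (ap g) L); auto. apply HL; auto.
Qed.

Lemma order_embedding_extends (f : X -> X) (D : list X) :
  (forall u v, In u D -> In v D -> (lt u v <-> lt (f u) (f v))) ->
  exists g : Aut lt, forall u, In u D -> ap g u = f u.
Proof.
  intros H. destruct (partial_iso_extends (map (fun u => (u, f u)) D)) as [g hg].
  - intros p q hp hq. apply in_map_iff in hp, hq.
    destruct hp as [u [<- hu]], hq as [v [<- hv]]. simpl. auto.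
  - exists g. intros u hu. apply (hg (u, f u)). apply in_map_iff. eauto.
Qed.

Lemma aut_moving_point (D : list X) a b :
  (forall z, In z D -> z <> a -> (lt z a <-> lt z b) /\ (lt a z <-> lt b z)) ->
  exists o : Aut lt, ap o a = b /\ forall z, In z D -> z <> a -> ap o z = z.
Proof.
  intros H.
  set (f := fun u => if excluded_middle_informative (u = a) then b else u).
  assert (fa : f a = b) by (unfold f; destruct excluded_middle_informative; congruence).
  assert (fz : forall z, z <> a -> f z = z)
    by (intros z hz; unfold f; destruct excluded_middle_informative; congruence).
  destruct (order_embedding_extends f (a :: D)) as [o ho].
  - intros u v hu hv.
    destruct (classic (u = a)) as [->|eu]; destruct (classic (v = a)) as [->|ev].
    + rewrite fa. split; intro h; exfalso; eapply lt_irrefl; eauto.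
    + rewrite fa, (fz v ev). destruct hv as [->|hv]; [congruence|]. apply (H v hv ev).
    + rewrite fa, (fz u eu). destruct hu as [->|hu]; [congruence|]. apply (H u hu eu).
    + rewrite (fz u eu), (fz v ev). tauto.
  - exists o. split.
    + rewrite <- fa. apply ho. simpl; auto.
    + intros z hz hza. rewrite <- (fz z hza) at 2. apply ho. simpl; auto.
Qed.

Lemma no_greatest : nontrivial -> forall x, exists y, lt x y.
Proof.
  intros [a [b hab]] x.
  destruct (partial_iso_extends [(a, x)]) as [g Hg].
  { intros p q [<-|[]] [<-|[]]; simpl. split; intro h; exfalso; eapply lt_irrefl; eauto. }
  exists (ap g b). specialize (Hg (a, x) (or_introl eq_refl)). simpl in Hg.
  rewrite <- Hg. apply ap_lt; auto.
Qed.

Lemma no_least : nontrivial -> forall x, exists y, lt y x.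
Proof.
  intros [a [b hab]] x.
  destruct (partial_iso_extends [(b, x)]) as [g Hg].
  { intros p q [<-|[]] [<-|[]]; simpl. split; intro h; exfalso; eapply lt_irrefl; eauto. }
  exists (ap g a). specialize (Hg (b, x) (or_introl eq_refl)). simpl in Hg.
  rewrite <- Hg. apply ap_lt; auto.
Qed.

Lemma lt_dense x y : lt x y -> exists c, lt x c /\ lt c y.
Proof.
  intros hxy. destruct (no_greatest (ex_intro _ x (ex_intro _ y hxy)) y) as [z hz].
  assert (hxz : lt x z) by (eapply lt_trans; eauto).
  destruct (partial_iso_extends [(x, x); (z, y)]) as [g Hg].
  { intros p q hp hq; simpl in *.
    destruct hp as [<-|[<-|[]]]; destruct hq as [<-|[<-|[]]]; simpl; split; intro h;
      auto; exfalso; solve [eapply lt_irrefl; eauto | eapply lt_asym; eauto]. }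
  exists (ap g y).
  pose proof (Hg (x, x) ltac:(simpl; auto)) as e1. pose proof (Hg (z, y) ltac:(simpl; auto)) as e2.
  simpl in *. split.
  - rewrite <- e1. apply ap_lt; auto.
  - pose proof (proj1 (ap_lt g y z) hz) as h. rewrite e2 in h. exact h.
Qed.

Lemma order_embedding_extends_glue (f c : X -> X) D Z :
  (forall u v, In u D -> In v D -> (lt u v <-> lt (f u) (f v))) ->
  (forall z1 z2, In z1 Z -> In z2 Z -> (lt z1 z2 <-> lt (c z1) (c z2))) ->
  (forall u z, In u D -> In z Z -> (lt u z <-> lt (f u) (c z)) /\ (lt z u <-> lt (c z) (f u))) ->
  (forall z, In z Z -> In z D -> f z = c z) ->
  exists o : Aut lt, (forall u, In u D -> ap o u = f u) /\ (forall z, In z Z -> ap o z = c z).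
Proof.
  intros hDD hZZ hDZ hZD.
  set (F := fun u => if excluded_middle_informative (In u D) then f u else c u).
  assert (FD : forall u, In u D -> F u = f u)
    by (intros u hu; unfold F; destruct excluded_middle_informative; tauto).
  assert (FZ : forall z, In z Z -> F z = c z)
    by (intros z hz; unfold F; destruct excluded_middle_informative; auto).
  destruct (order_embedding_extends F (D ++ Z)) as [o ho].
  - intros u v hu hv. apply in_app_or in hu, hv.
    destruct hu as [hu|hu]; destruct hv as [hv|hv].
    + rewrite !FD; auto.
    + rewrite FD, FZ; auto. apply hDZ; auto.
    + rewrite FZ, FD; auto. apply hDZ; auto.
    + rewrite !FZ; auto.
  - exists o. split; intros u hu; rewrite ho by (apply in_or_app; auto); auto.
Qed.

(** * Uniformities of pointwise convergence on Aut(X) *)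

Definition pointwise_unif (V : unif X) : unif (Aut lt) := fun E => exists xs F, V F /\
  forall g h : Aut lt, (forall x, In x xs -> F (ap g x) (ap h x)) -> E g h.

Lemma pointwise_unif_is_unif V : is_unif V -> is_unif (pointwise_unif V).
Proof.
  intros HV. unfold pointwise_unif. split; [|split; [|split; [|split; [|split]]]].
  - exists [], (fun _ _ => True). split; [apply unif_full|]; auto.
  - intros E F [xs [F0 [h0 h]]] hEF. exists xs, F0. auto.
  - intros E F [xs [F0 [h0 h]]] [xs' [F1 [h1 h']]].
    exists (xs ++ xs'), (fun a b => F0 a b /\ F1 a b). split; [apply unif_cap; auto|].
    intros g k H. split; [apply h|apply h']; intros x hx; apply H, in_or_app; auto.
  - intros E [xs [F0 [h0 h]]] g. apply h. intros; apply (unif_refl _ _ HV); auto.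
  - intros E [xs [F0 [h0 h]]]. exists xs, (fun a b => F0 b a).
    split; [exact (unif_inv _ _ HV F0 h0)|auto].
  - intros E [xs [F0 [h0 h]]]. destruct (unif_half _ _ HV F0 h0) as [F1 [h1 c1]].
    exists (fun g k => forall x, In x xs -> F1 (ap g x) (ap k x)). split; [exists xs, F1; auto|].
    intros a b c hab hbc. apply h. intros x hx. eauto.
Qed.

Lemma pointwise_unif_trivial V E : is_unif V -> (forall g h, E g h) -> pointwise_unif V E.
Proof. intros HV h. exists [], (fun _ _ => True). split; [apply unif_full|]; auto. Qed.

Lemma pointwise_unif_same V V' : same_unif V V' -> same_unif (pointwise_unif V) (pointwise_unif V').
Proof.
  intros hs E. split; intros [xs [F [hF hE]]]; exists xs, F; split; auto; apply hs; auto.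
Qed.

Lemma UG_pointwise_unif V : is_unif V -> same_unif (UG lt V) (pointwise_unif V).
Proof.
  intros HV E. split.
  - intros [xs [F [hF hE]]]. exists xs, F. split; auto. intros g h H. apply hE.
    exists g. intros x hx. split; [apply (unif_refl _ V HV)|]; auto.
  - intros [xs [F [hF hE]]]. destruct (unif_sym_half _ V HV F hF) as [F1 [hF1 [s1 c1]]].
    exists xs, F1. split; auto. intros h1 h2 [g hg]. apply hE. intros x hx.
    destruct (hg x hx) as [a b]. eapply c1; [apply s1; exact a|exact b].
Qed.

Section Closure.
Variables (V : unif X) (B : Type) (UB : unif B) (e : X -> B).
Hypothesis Hc : is_completion V UB e.

Lemma ext_ok_exists : (forall (g : Aut lt) E, V E -> V (fun x y => E (ap g x) (ap g y))) ->
  exists ext, ext_ok lt UB e ext.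
Proof.
  intros Hsat.
  apply (choice (fun (g : Aut lt) (psi : B -> B) => (forall x, psi (e x) = e (ap g x)) /\
    (forall A, unif_open UB A -> unif_open UB (fun b => A (psi b))))).
  intros g. apply (uniform_map_extends _ _ _ _ _ Hc (ap g)), Hsat.
Qed.

Variable W : unif (Aut lt).
Hypothesis HW : same_unif W (pointwise_unif V).

Theorem prod_closure_of_pointwise :
  completion_is_closure W (@prod_unif X B UB) (fun g x => e (ap g x)).
Proof.
  split; [|split; [|split]]; try apply (completion_prod_closure _ _ _ _ _ Hc). split.
  - intros g h E. apply aut_ext. intros x. apply (completion_inj _ _ _ _ _ Hc).
    exact (f_equal (fun f => f x) E).
  - intros E. rewrite (HW E). split.
    + intros [xs [F [hF hE]]].
      destruct (proj1 (completion_embedding _ _ _ _ _ Hc F) hF) as [F0 [hF0 hF0']].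
      exists (fun f f' => forall x, In x xs -> F0 (f x) (f' x)). split; [exists xs, F0; auto|].
      intros g h H. apply hE. intros x hx. apply hF0'. auto.
    + intros [F [[xs [F0 [hF0 hF]]] hE]].
      exists xs, (fun a b => F0 (e a) (e b)).
      split; [apply (completion_pullback _ _ _ _ _ Hc); auto|].
      intros g h H. apply hE, hF. auto.
Qed.

Theorem ellis_closure_of_equicontinuous ext : ext_ok lt UB e ext ->
  (forall b F, UB F -> pointwise_unif V (fun g h => F (ext g b) (ext h b))) ->
  completion_is_closure W (@prod_unif B B UB) ext.
Proof.
  intros hext Hequi.
  assert (ext_e : forall g x, ext g (e x) = e (ap g x)) by (intros g; apply hext).
  split; [|split; [|split]]; try apply (completion_prod_closure _ _ _ _ _ Hc). split.
  - intros g h E. apply aut_ext. intros x. apply (completion_inj _ _ _ _ _ Hc).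
    rewrite <- !ext_e, E. auto.
  - intros E. rewrite (HW E). split.
    + intros [xs [F [hF hE]]].
      destruct (proj1 (completion_embedding _ _ _ _ _ Hc F) hF) as [F0 [hF0 hF0']].
      exists (fun f f' => forall b, In b (map e xs) -> F0 (f b) (f' b)).
      split; [exists (map e xs), F0; auto|].
      intros g h H. apply hE. intros x hx. apply hF0'. rewrite <- !ext_e. apply H, in_map; auto.
    + intros [F [[bs [F0 [hF0 hF]]] hE]].
      assert (HV : is_unif (pointwise_unif V))
        by apply pointwise_unif_is_unif, (completion_source_unif _ _ _ Hc).
      apply (unif_sup _ _ HV (fun g h => forall b, In b bs -> F0 (ext g b) (ext h b))).
      * apply (unif_forall_in _ _ HV bs). intros b _. apply Hequi; auto.
      * intros g h H. apply hE, hF, H.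
Qed.

End Closure.

(** * The Roelcke uniformity of the permutation topology *)

Lemma same_block_refl zs a : same_block lt zs a a.
Proof. intros x _; tauto. Qed.
Lemma same_block_sym zs a b : same_block lt zs a b -> same_block lt zs b a.
Proof. intros h x hx; specialize (h x hx); tauto. Qed.
Lemma same_block_trans zs a b c :
  same_block lt zs a b -> same_block lt zs b c -> same_block lt zs a c.
Proof. intros h h' x hx; specialize (h x hx); specialize (h' x hx); tauto. Qed.
Lemma same_block_app_l zs zs' a b : same_block lt (zs ++ zs') a b -> same_block lt zs a b.
Proof. intros h x hx; apply h, in_or_app; auto. Qed.
Lemma same_block_app_r zs zs' a b : same_block lt (zs ++ zs') a b -> same_block lt zs' a b.
Proof. intros h x hx; apply h, in_or_app; auto. Qed.

Lemma same_block_gt zs a b z : same_block lt zs a b -> In z zs -> (lt z a <-> lt z b).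
Proof.
  intros h hz. destruct (h z hz) as [e1 e2].
  split; intro hl.
  - destruct (lt_total z b) as [?|[<-|hb]]; auto; exfalso.
    + assert (a = z) by (apply e1; auto). subst. eapply lt_irrefl; eauto.
    + apply e2 in hb. eapply lt_asym; eauto.
  - destruct (lt_total z a) as [?|[<-|ha]]; auto; exfalso.
    + assert (b = z) by (apply e1; auto). subst. eapply lt_irrefl; eauto.
    + apply e2 in ha. eapply lt_asym; eauto.
Qed.

Lemma same_block_of_sides zs t y :
  (forall z, In z zs -> (lt t z /\ lt y z) \/ (lt z t /\ lt z y)) -> same_block lt zs t y.
Proof.
  intros H z hz. destruct (H z hz) as [[h1 h2]|[h1 h2]].
  - split; split; intros h; auto; exfalso; subst; eapply lt_irrefl; eauto.
  - split; split; intros h; try (exfalso; subst; eapply lt_irrefl; eauto; fail);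
      exfalso; eapply lt_asym; eauto.
Qed.

Definition St (xs : list X) (o : Aut lt) : Prop := forall x, In x xs -> ap o x = x.

Lemma same_block_St zs (o : Aut lt) y : St zs o -> same_block lt zs y (ap o y).
Proof.
  intros ho z hz. split.
  - split; intro E; [subst; auto|]. rewrite <- (ho z hz) in E. apply ap_inj in E. auto.
  - rewrite (ap_lt o y z), (ho z hz). tauto.
Qed.

Lemma UXd_is_unif : is_unif (UXd lt).
Proof.
  unfold UXd. split; [|split; [|split; [|split; [|split]]]].
  - exists []; auto.
  - intros E F [zs h] hEF. exists zs; auto.
  - intros E F [zs h] [zs' h']. exists (zs ++ zs'). intros a b hab.
    split; [apply h; eapply same_block_app_l|apply h'; eapply same_block_app_r]; eauto.
  - intros E [zs h] a. apply h, same_block_refl.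
  - intros E [zs h]. exists zs. intros a b hab. apply h, same_block_sym; auto.
  - intros E [zs h]. exists (same_block lt zs). split; [exists zs; auto|].
    intros a b c h1 h2. apply h. eapply same_block_trans; eauto.
Qed.

Lemma UXd_saturated (g : Aut lt) E : UXd lt E -> UXd lt (fun x y => E (ap g x) (ap g y)).
Proof.
  intros [zs h]. exists (map (inv_fn g) zs). intros a b hab. apply h.
  intros z hz. destruct (hab (inv_fn g z)) as [e1 e2]; [apply in_map; auto|]. split.
  - rewrite <- (ap_inv_fn g z). split; intros Eq; apply ap_inj in Eq; f_equal; apply e1; auto.
  - rewrite !lt_ap_inv_fn. auto.
Qed.

Lemma stabilizer_nbhd xs : nbhd_id (perm_top lt) (St xs).
Proof.
  exists (St xs). split; [|split]; auto.
  - intros g hg. exists xs. intros h hh x hx. rewrite hh; auto.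
  - intros g hg x _; auto.
Qed.

Lemma nbhd_contains_St O : nbhd_id (perm_top lt) O -> exists xs, forall h, St xs h -> O h.
Proof.
  intros [V [hV [hid hVO]]]. destruct (hV id_aut (hid id_aut (fun x => eq_refl))) as [xs hxs].
  exists xs. intros h hh. apply hVO, hxs. intros x hx. rewrite hh; auto.
Qed.

Lemma pointwise_UXd_left : subunif (pointwise_unif (UXd lt)) (left_unif (perm_top lt)).
Proof.
  intros F [xs [F0 [[zs hF0] hF]]]. exists (St xs). split; [apply stabilizer_nbhd|].
  intros g h [o [ho e]]. apply hF. intros x hx. rewrite e, ho; auto. apply hF0, same_block_refl.
Qed.

Lemma pointwise_UXd_right : subunif (pointwise_unif (UXd lt)) (right_unif (perm_top lt)).
Proof.
  intros F [xs [F0 [[zs hF0] hF]]]. exists (St zs). split; [apply stabilizer_nbhd|].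
  intros g h [o [ho e]]. apply hF. intros x hx. rewrite e. apply hF0, same_block_St; auto.
Qed.

Lemma aut_fixing_mapping xs zs (g h : Aut lt) :
  (forall x, In x xs -> same_block lt zs (ap g x) (ap h x)) ->
  exists o, St zs o /\ forall x, In x xs -> ap o (ap g x) = ap h x.
Proof.
  intros Hd.
  destruct (partial_iso_extends (map (fun x => (ap g x, ap h x)) xs ++ map (fun z => (z, z)) zs))
    as [o ho].
  - intros p q hp hq. apply in_app_or in hp, hq.
    destruct hp as [hp|hp]; destruct hq as [hq|hq]; apply in_map_iff in hp, hq;
      destruct hp as [x [<- hx]]; destruct hq as [y [<- hy]]; simpl.
    + rewrite <- (ap_lt g), <- (ap_lt h). tauto.
    + specialize (Hd x hx y hy). tauto.
    + apply (same_block_gt zs); auto.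
    + tauto.
  - exists o. split.
    + intros z hz. apply (ho (z, z)), in_or_app. right. apply in_map_iff; eauto.
    + intros x hx. apply (ho (ap g x, ap h x)), in_or_app. left. apply in_map_iff; eauto.
Qed.

Theorem roelcke_pointwise_UXd : same_unif (roelcke_unif (perm_top lt)) (pointwise_unif (UXd lt)).
Proof.
  intros E. split.
  - intros [W [HW [HWL [HWR hE]]]].
    destruct (unif_half _ W HW E hE) as [F [hF cF]].
    destruct (HWL F hF) as [O1 [hO1 h1]]. destruct (HWR F hF) as [O2 [hO2 h2]].
    destruct (nbhd_contains_St O1 hO1) as [xs hxs]. destruct (nbhd_contains_St O2 hO2) as [zs hzs].
    exists xs, (same_block lt zs). split; [exists zs; auto|]. intros g h Hd.
    destruct (aut_fixing_mapping xs zs g h Hd) as [o [oz og]].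
    (* g and h are joined through g s = o^-1 h, with s = g^-1 o^-1 h fixing xs *)
    set (s := comp_aut (inv_aut g) (comp_aut (inv_aut o) h)).
    apply (cF g (comp_aut g s) h).
    + apply h1. exists s. split; [|reflexivity].
      apply hxs. intros x hx. unfold s. rewrite !ap_comp, !ap_inv, <- (og x hx), !inv_fn_ap. auto.
    + apply h2. exists o. split; [apply hzs; exact oz|].
      intros x. unfold s. rewrite !ap_comp, !ap_inv, !ap_inv_fn. auto.
  - intros hE. exists (pointwise_unif (UXd lt)).
    split; [apply pointwise_unif_is_unif, UXd_is_unif|].
    split; [apply pointwise_UXd_left|split; [apply pointwise_UXd_right|auto]].
Qed.

(** * The order topology *)

Definition above (a : option X) (x : X) : Prop :=
  match a with None => True | Some a => lt a x end.
Definition below (b : option X) (x : X) : Prop :=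
  match b with None => True | Some b => lt x b end.
Definition between (a b : option X) (x : X) : Prop := above a x /\ below b x.

Lemma order_basic_between a b : order_basic lt (between a b).
Proof.
  unfold order_basic, between; destruct a as [a|], b as [b|]; simpl.
  - right; right; right. exists a, b. tauto.
  - right; right; left. exists a. tauto.
  - right; left. exists b. tauto.
  - left; tauto.
Qed.

Lemma order_basic_open V : order_basic lt V -> order_top lt V.
Proof. intros h x hx. exists V; auto. Qed.

Lemma order_top_between a b : order_top lt (between a b).
Proof. apply order_basic_open, order_basic_between. Qed.

Lemma order_top_lt m : order_top lt (fun y => lt y m).
Proof. apply order_basic_open. right; left. exists m. tauto. Qed.
Lemma order_top_gt m : order_top lt (fun y => lt m y).
Proof. apply order_basic_open. right; right; left. exists m. tauto. Qed.

Lemma order_top_between_nbhd V x : order_top lt V -> V x ->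
  exists a b, between a b x /\ forall y, between a b y -> V y.
Proof.
  unfold between. intros hV hx. destruct (hV x hx) as [W [hW [hWx hWV]]].
  destruct hW as [h|[[b h]|[[a h]|[a [b h]]]]];
    [exists None, None|exists None, (Some b)|exists (Some a), None|exists (Some a), (Some b)];
    simpl; (split; [|intros y hy; apply hWV, h]); rewrite ?h in hWx; tauto.
Qed.

Lemma above_meet a1 a2 x : above a1 x -> above a2 x ->
  exists a, above a x /\ forall y, above a y -> above a1 y /\ above a2 y.
Proof.
  destruct a1 as [a1|], a2 as [a2|]; simpl; intros h1 h2.
  - destruct (lt_total a1 a2) as [h|[<-|h]].
    + exists (Some a2); simpl; split; auto. intros y hy; split; auto. eapply lt_trans; eauto.
    + exists (Some a1); simpl; auto.
    + exists (Some a1); simpl; split; auto. intros y hy; split; auto. eapply lt_trans; eauto.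
  - exists (Some a1); simpl; auto.
  - exists (Some a2); simpl; auto.
  - exists None; simpl; auto.
Qed.

Lemma below_meet b1 b2 x : below b1 x -> below b2 x ->
  exists b, below b x /\ forall y, below b y -> below b1 y /\ below b2 y.
Proof.
  destruct b1 as [b1|], b2 as [b2|]; simpl; intros h1 h2.
  - destruct (lt_total b1 b2) as [h|[<-|h]].
    + exists (Some b1); simpl; split; auto. intros y hy; split; auto. eapply lt_trans; eauto.
    + exists (Some b1); simpl; auto.
    + exists (Some b2); simpl; split; auto. intros y hy; split; auto. eapply lt_trans; eauto.
  - exists (Some b1); simpl; auto.
  - exists (Some b2); simpl; auto.
  - exists None; simpl; auto.
Qed.

Lemma order_top_cap A B : order_top lt A -> order_top lt B -> order_top lt (fun x => A x /\ B x).
Proof.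
  intros hA hB x [hx1 hx2].
  destruct (order_top_between_nbhd A x hA hx1) as [a1 [b1 [[l1 h1] s1]]].
  destruct (order_top_between_nbhd B x hB hx2) as [a2 [b2 [[l2 h2] s2]]].
  destruct (above_meet a1 a2 x l1 l2) as [a [ha ha']].
  destruct (below_meet b1 b2 x h1 h2) as [b [hb hb']].
  exists (between a b). split; [apply order_basic_between|split; [split; auto|]].
  intros y [hy1 hy2]. destruct (ha' y hy1), (hb' y hy2).
  split; [apply s1|apply s2]; split; auto.
Qed.

Lemma order_top_forall_in {I} (l : list I) (P : I -> X -> Prop) :
  (forall i, In i l -> order_top lt (P i)) -> order_top lt (fun x => forall i, In i l -> P i x).
Proof.
  induction l as [|i l IH]; intros H.
  - intros x _. exists (fun _ => True). split; [left; auto|simpl; tauto].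
  - intros x hx. destruct (order_top_cap _ _ (H i (or_introl eq_refl))
                            (IH (fun j hj => H j (or_intror hj))) x) as [V [hV [hVx hVs]]].
    { split; [apply hx; simpl; auto|intros; apply hx; simpl; auto]. }
    exists V. split; auto. split; auto. intros y hy j [<-|hj]; destruct (hVs y hy); auto.
Qed.

Lemma order_top_impl (P : Prop) A : order_top lt A -> order_top lt (fun x => P -> A x).
Proof.
  intros hA. destruct (classic P) as [p|np].
  - intros x hx. destruct (hA x (hx p)) as [V [h1 [h2 h3]]]. exists V; split; auto.
  - intros x _. exists (fun _ => True). split; [left; auto|split; auto]. tauto.
Qed.

Lemma order_top_preimage (g : Aut lt) V : order_top lt V -> order_top lt (fun y => V (ap g y)).
Proof.
  intros hV y hy. destruct (order_top_between_nbhd V (ap g y) hV hy) as [a [b [[la hb] s]]].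
  exists (between (option_map (inv_fn g) a) (option_map (inv_fn g) b)).
  split; [apply order_basic_between|split].
  - destruct a, b; simpl in *; split; simpl; auto;
      try (apply (lt_inv_fn_ap g); auto); try (apply (lt_ap_inv_fn g); auto).
  - intros y' [l' h']. apply s. split.
    + destruct a; simpl in *; auto. apply (lt_inv_fn_ap g); auto.
    + destruct b; simpl in *; auto. apply (lt_ap_inv_fn g); auto.
Qed.

(** * The maximal equiuniformity for the pointwise topology *)

Definition pointed_opens (l : list (X * (X -> Prop))) : Prop :=
  forall p, In p l -> order_top lt (snd p) /\ snd p (fst p).
Definition basic_nbhd (l : list (X * (X -> Prop))) (o : Aut lt) : Prop :=
  forall p, In p l -> snd p (ap o (fst p)).

Lemma pointed_opens_app l1 l2 : pointed_opens l1 -> pointed_opens l2 -> pointed_opens (l1 ++ l2).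
Proof. intros h1 h2 p hp. apply in_app_or in hp. destruct hp; auto. Qed.
Lemma basic_nbhd_app_l l1 l2 o : basic_nbhd (l1 ++ l2) o -> basic_nbhd l1 o.
Proof. intros h p hp. apply h, in_or_app; auto. Qed.
Lemma basic_nbhd_app_r l1 l2 o : basic_nbhd (l1 ++ l2) o -> basic_nbhd l2 o.
Proof. intros h p hp. apply h, in_or_app; auto. Qed.
Lemma basic_nbhd_id l : pointed_opens l -> basic_nbhd l id_aut.
Proof. intros hv p hp. apply hv; auto. Qed.

Lemma ptop_nbhd_basic O :
  nbhd_id (ptop lt) O <-> exists l, pointed_opens l /\ forall o, basic_nbhd l o -> O o.
Proof.
  split.
  - intros [V [hV [hid hVO]]].
    destruct (hV id_aut (hid id_aut (fun x => eq_refl))) as [l [hl1 hl2]].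
    exists l. split; [intros p hp; apply hl1; auto|]. intros o ho. apply hVO, hl2, ho.
  - intros [l [hl hO]]. exists (basic_nbhd l). split; [|split]; auto.
    + intros g hg. exists l. split; auto. intros p hp. split; [apply hl|apply hg]; auto.
    + intros g hg p hp. rewrite hg. apply hl; auto.
Qed.

Definition orbit_unif : unif X :=
  fun E => exists O, nbhd_id (ptop lt) O /\ forall (o : Aut lt) x, O o -> E x (ap o x).

Lemma orbit_unif_basic E :
  orbit_unif E <-> exists l, pointed_opens l /\ forall o x, basic_nbhd l o -> E x (ap o x).
Proof.
  split.
  - intros [O [hO h]]. apply ptop_nbhd_basic in hO. destruct hO as [l [hl hl']].
    exists l; split; auto.
  - intros [l [hl h]]. exists (basic_nbhd l). split; auto. apply ptop_nbhd_basic. exists l; auto.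
Qed.

Lemma between_inv_nbhd z a b : between a b z -> exists l, pointed_opens l /\
  forall o, basic_nbhd l o -> between a b (inv_fn o z).
Proof.
  intros [ha hb].
  exists ((match a with Some a0 => [(a0, fun y => lt y z)] | None => [] end) ++
          (match b with Some b0 => [(b0, fun y => lt z y)] | None => [] end)).
  split.
  - apply pointed_opens_app; [destruct a|destruct b]; simpl in *; intros p hp; try contradiction;
      destruct hp as [<-|[]]; simpl; split; auto; [apply order_top_lt|apply order_top_gt].
  - intros o ho. split.
    + destruct a as [a0|]; simpl; auto. apply lt_ap_inv_fn.
      apply (basic_nbhd_app_l _ _ _ ho (a0, fun y => lt y z)); simpl; auto.
    + destruct b as [b0|]; simpl; auto. apply lt_inv_fn_ap.
      apply (basic_nbhd_app_r _ _ _ ho (b0, fun y => lt z y)). destruct a; simpl; auto.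
Qed.

Lemma basic_nbhd_inv l : pointed_opens l -> exists l', pointed_opens l' /\
  forall o, basic_nbhd l' o -> basic_nbhd l (inv_aut o).
Proof.
  induction l as [|p l IH]; intros hv.
  - exists []. split; [intros ? []|intros ? ? ? []].
  - destruct IH as [l1 [hl1 h1]]; [intros q hq; apply hv; simpl; auto|].
    destruct (hv p (or_introl eq_refl)) as [hop hp].
    destruct (order_top_between_nbhd _ _ hop hp) as [a [b [hab s]]].
    destruct (between_inv_nbhd _ _ _ hab) as [l2 [hl2 h2]].
    exists (l1 ++ l2). split; [apply pointed_opens_app; auto|].
    intros o ho q [<-|hq].
    + apply s, h2. eapply basic_nbhd_app_r; eauto.
    + apply h1; auto. eapply basic_nbhd_app_l; eauto.
Qed.

Lemma above_mul_nbhd a z : above a z -> exists a', above a' z /\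
  exists l, pointed_opens l /\ forall o, basic_nbhd l o -> forall y, above a' y -> above a (ap o y).
Proof.
  destruct a as [a0|]; simpl; intros ha.
  - destruct (lt_dense a0 z ha) as [a1 [h1 h2]].
    exists (Some a1). split; auto. exists [(a1, fun y => lt a0 y)]. split.
    + intros p [<-|[]]; simpl; split; auto. apply order_top_gt.
    + intros o ho y hy. eapply lt_trans; [apply (ho (a1, fun y => lt a0 y)); simpl; auto|].
      apply ap_lt; auto.
  - exists None. split; auto. exists []. split; [intros ? []|auto].
Qed.

Lemma below_mul_nbhd b z : below b z -> exists b', below b' z /\
  exists l, pointed_opens l /\ forall o, basic_nbhd l o -> forall y, below b' y -> below b (ap o y).
Proof.
  destruct b as [b0|]; simpl; intros hb.
  - destruct (lt_dense z b0 hb) as [b1 [h1 h2]].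
    exists (Some b1). split; auto. exists [(b1, fun y => lt y b0)]. split.
    + intros p [<-|[]]; simpl; split; auto. apply order_top_lt.
    + intros o ho y hy. eapply lt_trans; [|apply (ho (b1, fun y => lt y b0)); simpl; auto].
      apply ap_lt; auto.
  - exists None. split; auto. exists []. split; [intros ? []|auto].
Qed.

Lemma between_mul_nbhd z a b : between a b z -> exists l, pointed_opens l /\
  forall o1 o2, basic_nbhd l o1 -> basic_nbhd l o2 -> between a b (ap o2 (ap o1 z)).
Proof.
  intros [ha hb].
  destruct (above_mul_nbhd a z ha) as [a' [ha' [la [hla hla']]]].
  destruct (below_mul_nbhd b z hb) as [b' [hb' [lb [hlb hlb']]]].
  exists ([(z, between a' b')] ++ la ++ lb). split.
  - apply pointed_opens_app; [|apply pointed_opens_app; auto].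
    intros p [<-|[]]; simpl; split; [apply order_top_between|split; auto].
  - intros o1 o2 h1 h2.
    destruct (h1 (z, between a' b')) as [hz1 hz2]; [simpl; auto|]. split.
    + apply (hla' o2); auto.
      eapply basic_nbhd_app_l, basic_nbhd_app_r with (l1 := [(z, between a' b')]); eauto.
    + apply (hlb' o2); auto.
      eapply basic_nbhd_app_r, basic_nbhd_app_r with (l1 := [(z, between a' b')]); eauto.
Qed.

Lemma basic_nbhd_mul l : pointed_opens l -> exists l', pointed_opens l' /\
  forall o1 o2, basic_nbhd l' o1 -> basic_nbhd l' o2 -> basic_nbhd l (comp_aut o2 o1).
Proof.
  induction l as [|p l IH]; intros hv.
  - exists []. split; [intros ? []|intros ? ? ? ? ? []].
  - destruct IH as [l1 [hl1 h1]]; [intros q hq; apply hv; simpl; auto|].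
    destruct (hv p (or_introl eq_refl)) as [hop hp].
    destruct (order_top_between_nbhd _ _ hop hp) as [a [b [hab s]]].
    destruct (between_mul_nbhd _ _ _ hab) as [l2 [hl2 h2]].
    exists (l1 ++ l2). split; [apply pointed_opens_app; auto|].
    intros o1 o2 ho1 ho2 q [<-|hq].
    + apply s, h2; eapply basic_nbhd_app_r; eauto.
    + apply h1; auto; eapply basic_nbhd_app_l; eauto.
Qed.

Lemma basic_nbhd_conj (g : Aut lt) l : pointed_opens l -> exists l', pointed_opens l' /\
  forall o, basic_nbhd l' o -> basic_nbhd l (comp_aut g (comp_aut o (inv_aut g))).
Proof.
  intros hv. exists (map (fun p => (inv_fn g (fst p), fun y => snd p (ap g y))) l). split.
  - intros q hq. apply in_map_iff in hq. destruct hq as [p [<- hp]]. simpl.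
    split; [apply order_top_preimage, hv; auto|]. rewrite ap_inv_fn. apply hv; auto.
  - intros o ho p hp. apply (ho (inv_fn g (fst p), fun y => snd p (ap g y))).
    apply in_map_iff. eauto.
Qed.

Lemma orbit_unif_is_unif : is_unif orbit_unif.
Proof.
  split; [|split; [|split; [|split; [|split]]]]; try setoid_rewrite orbit_unif_basic.
  - exists []. split; [intros ? []|auto].
  - intros E F [l [hl h]] hEF. exists l. split; auto.
  - intros E F [l [hl h]] [l' [hl' h']]. exists (l ++ l'). split; [apply pointed_opens_app; auto|].
    intros o x ho.
    split; [apply h; eapply basic_nbhd_app_l|apply h'; eapply basic_nbhd_app_r]; eauto.
  - intros E [l [hl h]] a. apply (h id_aut a), basic_nbhd_id; auto.
  - intros E [l [hl h]]. destruct (basic_nbhd_inv l hl) as [l' [hl' h']]. exists l'. split; auto.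
    intros o x ho. specialize (h (inv_aut o) (ap o x) (h' o ho)).
    rewrite ap_inv, inv_fn_ap in h. exact h.
  - intros E [l [hl h]]. destruct (basic_nbhd_mul l hl) as [l' [hl' h']].
    exists (fun x y => exists o, basic_nbhd l' o /\ y = ap o x). split.
    + exists l'. split; auto. intros o x ho. eauto.
    + intros a b c [o1 [h1 ->]] [o2 [h2 ->]]. apply (h (comp_aut o2 o1) a). auto.
Qed.

Lemma orbit_unif_topology A : order_top lt A <-> unif_open orbit_unif A.
Proof.
  split.
  - intros hA a ha. exists (fun y y' => y = a -> A y'). split.
    + apply orbit_unif_basic. exists [(a, A)]. split.
      * intros p [<-|[]]; simpl; auto.
      * intros o x ho ->. apply (ho (a, A)); simpl; auto.
    + intros b hb. apply hb; auto.
  - intros hA a ha. destruct (hA a ha) as [E [hE hEA]].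
    apply orbit_unif_basic in hE. destruct hE as [l [hl hE]].
    (* points of N can be reached from a by an automorphism in the basic neighbourhood *)
    set (N := fun y => forall p, In p l ->
      (fst p = a -> snd p y) /\ (lt (fst p) a -> lt (fst p) y) /\ (lt a (fst p) -> lt y (fst p))).
    assert (hN : order_top lt N).
    { apply order_top_forall_in. intros p hp.
      apply order_top_cap; [apply order_top_impl, hl; auto|].
      apply order_top_cap; apply order_top_impl; [apply order_top_gt|apply order_top_lt]. }
    destruct (hN a) as [V [hV [hVa hVN]]].
    { intros p hp. split; [intros <-; apply hl; auto|split; auto]. }
    exists V. split; [exact hV|split; [exact hVa|]]. intros y hy.
    destruct (aut_moving_point (map fst l) a y) as [o [oa oz]].
    { intros z hz hza. apply in_map_iff in hz. destruct hz as [p [<- hp]].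
      destruct (hVN y hy p hp) as [_ [k1 k2]].
      destruct (lt_total (fst p) a) as [h|[h|h]]; [|contradiction|];
        split; split; intros h'; auto; exfalso; eapply lt_asym; eauto. }
    rewrite <- oa. apply hEA, hE. intros p hp.
    destruct (classic (fst p = a)) as [e|e].
    + rewrite e, oa. apply (hVN y hy p hp); auto.
    + rewrite oz; [apply hl; auto|apply in_map; auto|auto].
Qed.

Lemma orbit_unif_equiunif : is_equiunif lt (order_top lt) (ptop lt) orbit_unif.
Proof.
  split; [apply orbit_unif_is_unif|split; [apply orbit_unif_topology|split]].
  - intros g E hE. apply orbit_unif_basic in hE. destruct hE as [l [hl h]].
    destruct (basic_nbhd_conj g l hl) as [l' [hl' h']]. apply orbit_unif_basic. exists l'.
    split; auto. intros o x ho. specialize (h _ (ap g x) (h' o ho)).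
    rewrite !ap_comp, ap_inv, inv_fn_ap in h. exact h.
  - intros E [O [hO h]]. exists O. split; auto.
Qed.

Lemma orbit_unif_max : max_equiunif lt (order_top lt) (ptop lt) orbit_unif.
Proof.
  split; [apply orbit_unif_equiunif|]. intros V [_ [_ [_ hb]]] E hE.
  destruct (hb E hE) as [O [hO h]]. exists O. split; auto.
Qed.

Lemma max_equiunif_orbit_unif UXp :
  max_equiunif lt (order_top lt) (ptop lt) UXp -> same_unif UXp orbit_unif.
Proof.
  intros [hequi hmax] E. split.
  - intros hE. destruct hequi as [_ [_ [_ hb]]]. destruct (hb E hE) as [O [hO h]]. exists O; auto.
  - apply hmax, orbit_unif_equiunif.
Qed.

Lemma orbit_unif_blocks F : orbit_unif F -> exists zs, forall a b, same_block lt zs a b -> F a b.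
Proof.
  intros hF. apply orbit_unif_basic in hF. destruct hF as [l [hl hF]].
  exists (map fst l). intros a b hab.
  destruct (aut_moving_point (map fst l) a b) as [o [oa oz]].
  { intros z hz _. split; [apply (same_block_gt (map fst l)); auto|apply hab; auto]. }
  rewrite <- oa. apply hF. intros p hp.
  destruct (classic (fst p = a)) as [e|e].
  - assert (hb : b = fst p) by (apply (hab (fst p) (in_map _ _ _ hp)); auto).
    rewrite e, oa, hb. apply hl; auto.
  - rewrite oz; [apply hl; auto|apply in_map; auto|auto].
Qed.

Lemma orbit_unif_ball_between F x : orbit_unif F ->
  exists a b, between a b x /\ forall y, between a b y -> F x y.
Proof.
  intros hF. pose proof orbit_unif_is_unif as HW.
  pose proof (proj2 (orbit_unif_topology _) (unif_ball_interior _ _ HW x F hF)) as hA.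
  destruct (order_top_between_nbhd _ x hA) as [a [b [hab s]]]; [exists F; split; auto|].
  exists a, b. split; auto. intros y hy. destruct (s y hy) as [G [hG h]].
  apply h, (unif_refl _ _ HW G hG).
Qed.

Lemma orbit_unif_right_interval F x : nontrivial -> orbit_unif F ->
  exists u, lt x u /\ forall y, lt x y -> lt y u -> F x y.
Proof.
  intros nt hF. destruct (orbit_unif_ball_between F x hF) as [a [b [[ha hb] s]]].
  destruct b as [b|]; [exists b|destruct (no_greatest nt x) as [u hu]; exists u];
    split; auto; intros y h1 h2; apply s; split; simpl; auto;
    destruct a; simpl in *; auto; eapply lt_trans; eauto.
Qed.

Lemma orbit_unif_left_interval F x : nontrivial -> orbit_unif F ->
  exists u, lt u x /\ forall y, lt u y -> lt y x -> F x y.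
Proof.
  intros nt hF. destruct (orbit_unif_ball_between F x hF) as [a [b [[ha hb] s]]].
  destruct a as [a|]; [exists a|destruct (no_least nt x) as [u hu]; exists u];
    split; auto; intros y h1 h2; apply s; split; simpl; auto;
    destruct b; simpl in *; auto; eapply lt_trans; eauto.
Qed.

(** * The uniformity R_K *)

Lemma exists_max_image (D : list X) (P : X -> Prop) (f : X -> X) : (exists u, In u D /\ P u) ->
  exists m, In m D /\ P m /\ forall u, In u D -> P u -> f u = f m \/ lt (f u) (f m).
Proof.
  induction D as [|d D IH]; intros [u [hu hp]]; [destruct hu|].
  destruct (classic (exists u, In u D /\ P u)) as [ex|nex].
  - destruct (IH ex) as [m [hm [pm hm']]].
    destruct (classic (P d /\ lt (f m) (f d))) as [[pd hd]|nd].
    + exists d. split; [simpl; auto|split; auto]. intros v [<-|hv] pv; [left; auto|].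
      right. eapply le_lt_trans; [apply hm'|]; eauto.
    + exists m. split; [simpl; auto|split; auto]. intros v [<-|hv] pv; auto.
      apply not_lt_le. tauto.
  - exists d. destruct hu as [<-|hu]; [|exfalso; eauto].
    split; [simpl; auto|split; auto]. intros v [<-|hv] pv; [left; auto|exfalso; eauto].
Qed.

Lemma exists_min_image (D : list X) (P : X -> Prop) (f : X -> X) : (exists u, In u D /\ P u) ->
  exists m, In m D /\ P m /\ forall u, In u D -> P u -> f m = f u \/ lt (f m) (f u).
Proof.
  induction D as [|d D IH]; intros [u [hu hp]]; [destruct hu|].
  destruct (classic (exists u, In u D /\ P u)) as [ex|nex].
  - destruct (IH ex) as [m [hm [pm hm']]].
    destruct (classic (P d /\ lt (f d) (f m))) as [[pd hd]|nd].
    + exists d. split; [simpl; auto|split; auto]. intros v [<-|hv] pv; [left; auto|].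
      right. eapply lt_le_trans; [|apply hm']; eauto.
    + exists m. split; [simpl; auto|split; auto]. intros v [<-|hv] pv; auto.
      apply not_lt_le. tauto.
  - exists d. destruct hu as [<-|hu]; [|exfalso; eauto].
    split; [simpl; auto|split; auto]. intros v [<-|hv] pv; [left; auto|exfalso; eauto].
Qed.

Lemma convex_meets_gap (K : X -> Prop) k0 (D : list X) (f : X -> X) (Pl Ph : X -> Prop) :
  (forall a b y, K a -> K b -> lt a y -> lt y b -> K y) -> K k0 ->
  (forall u, In u D -> Pl u -> exists k, K k /\ lt (f u) k) ->
  (forall u, In u D -> Ph u -> exists k, K k /\ lt k (f u)) ->
  (forall u v, In u D -> In v D -> Pl u -> Ph v -> lt (f u) (f v)) ->
  exists c, K c /\ (forall u, In u D -> Pl u -> lt (f u) c) /\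
    (forall u, In u D -> Ph u -> lt c (f u)).
Proof.
  intros Kc K0 Hl Hh Hlh.
  destruct (classic (exists u, In u D /\ Pl u)) as [el|nl];
  destruct (classic (exists u, In u D /\ Ph u)) as [eh|nh].
  - destruct (exists_max_image D Pl f el) as [um [hum [pum mx]]].
    destruct (exists_min_image D Ph f eh) as [vm [hvm [pvm mn]]].
    destruct (Hl um hum pum) as [k1 [K1 h1]]. destruct (Hh vm hvm pvm) as [k2 [K2 h2]].
    pose proof (Hlh um vm hum hvm pum pvm) as huv.
    assert (exists c, K c /\ lt (f um) c /\ lt c (f vm)) as [c [Kc' [c1 c2]]].
    { destruct (classic (lt k1 (f vm))) as [c1|c1]; [exists k1; auto|].
      destruct (classic (lt (f um) k2)) as [c2|c2]; [exists k2; auto|].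
      apply not_lt_le in c1, c2. destruct (lt_dense _ _ huv) as [c [hc1 hc2]].
      exists c. split; auto.
      exact (Kc k2 k1 c K2 K1 (le_lt_trans _ _ _ c2 hc1) (lt_le_trans _ _ _ hc2 c1)). }
    exists c. split; auto. split.
    + intros u hu pu. exact (le_lt_trans _ _ _ (mx u hu pu) c1).
    + intros v hv pv. exact (lt_le_trans _ _ _ c2 (mn v hv pv)).
  - destruct (exists_max_image D Pl f el) as [um [hum [pum mx]]].
    destruct (Hl um hum pum) as [k1 [K1 h1]]. exists k1. split; auto. split.
    + intros u hu pu. exact (le_lt_trans _ _ _ (mx u hu pu) h1).
    + intros v hv pv. exfalso; eauto.
  - destruct (exists_min_image D Ph f eh) as [vm [hvm [pvm mn]]].
    destruct (Hh vm hvm pvm) as [k2 [K2 h2]]. exists k2. split; auto. split.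
    + intros u hu pu. exfalso; eauto.
    + intros v hv pv. exact (lt_le_trans _ _ _ h2 (mn v hv pv)).
  - exists k0. split; auto. split; intros u hu pu; exfalso; eauto.
Qed.

Lemma between_convex a b x y z :
  between a b x -> between a b z -> lt x y -> lt y z -> between a b y.
Proof.
  intros [l1 h1] [l2 h2] hxy hyz. split.
  - destruct a; simpl in *; auto. eapply lt_trans; [exact l1|exact hxy].
  - destruct b; simpl in *; auto. eapply lt_trans; [exact hyz|exact h2].
Qed.

Lemma separating_nbhds l : pointed_opens l -> exists K : X -> X -> Prop,
  (forall z, order_top lt (K z)) /\ (forall z, K z z) /\
  (forall z a b y, K z a -> K z b -> lt a y -> lt y b -> K z y) /\
  (forall z1 z2 y1 y2, In z1 (map fst l) -> In z2 (map fst l) -> lt z1 z2 ->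
     K z1 y1 -> K z2 y2 -> lt y1 y2) /\
  (forall p, In p l -> forall y, K (fst p) y -> snd p y).
Proof.
  intros hv. set (Z := map fst l).
  destruct (choice (fun ab c => lt (fst ab) (snd ab) -> lt (fst ab) c /\ lt c (snd ab)))
    as [m hm].
  { intros [a b]. destruct (classic (lt a b)) as [h|h].
    - destruct (lt_dense a b h) as [c hc]. exists c; auto.
    - exists a. intros h'; contradiction. }
  destruct (choice_on (fun p ab => between (fst ab) (snd ab) (fst p) /\
              forall y, between (fst ab) (snd ab) y -> snd p y)
              (fun p => In p l) (fun _ => (None, None)))
    as [c hc].
  { intros p hp. destruct (hv p hp) as [hop hpp].
    destruct (order_top_between_nbhd _ _ hop hpp) as [a [b [h1 h2]]]. exists (a, b); auto. }
  (* cutting the chosen intervals at midpoints between points of Z makes the K z pairwise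
     ordered *)
  exists (fun z y => (forall p, In p l -> fst p = z -> between (fst (c p)) (snd (c p)) y) /\
                (forall z2, In z2 Z -> lt z z2 -> lt y (m (z, z2))) /\
                (forall z2, In z2 Z -> lt z2 z -> lt (m (z2, z)) y)).
  split; [|split; [|split; [|split]]].
  - intros z. apply order_top_cap; [|apply order_top_cap];
      apply order_top_forall_in; intros ? _; repeat apply order_top_impl.
    + apply order_top_between.
    + apply order_top_lt.
    + apply order_top_gt.
  - intros z. split; [|split].
    + intros p hp <-. apply hc; auto.
    + intros z2 _ h. apply (hm (z, z2) h).
    + intros z2 _ h. apply (hm (z2, z) h).
  - intros z a b y [a1 [a2 a3]] [b1 [b2 b3]] hay hyb. split; [|split].
    + intros p hp e. eapply between_convex; [apply a1|apply b1|exact hay|exact hyb]; auto.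
    + intros z2 hz2 h. eapply lt_trans; [exact hyb|apply b2; auto].
    + intros z2 hz2 h. eapply lt_trans; [apply a3; auto|exact hay].
  - intros z1 z2 y1 y2 h1 h2 h [_ [k1 _]] [_ [_ k2]].
    eapply lt_trans; [apply (k1 z2); auto|apply (k2 z1); auto].
  - intros p hp y [k _]. apply hc; auto.
Qed.

Lemma basic_nbhd_glue l : pointed_opens l -> exists l', pointed_opens l' /\
  forall (D : list X) (f : X -> X),
    (forall u v, In u D -> In v D -> (lt u v <-> lt (f u) (f v))) ->
    (forall u, In u D -> exists o, basic_nbhd l' o /\ ap o u = f u) ->
    exists o, basic_nbhd l o /\ forall u, In u D -> ap o u = f u.
Proof.
  intros hv. set (Z := map fst l).
  destruct (separating_nbhds l hv) as [K [Kopen [Kz [Kconv [Kord Ksub]]]]].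
  exists (map (fun z => (z, K z)) Z). split.
  { intros q hq. apply in_map_iff in hq. destruct hq as [z [<- _]]. simpl. auto. }
  intros D f hord hloc.
  assert (Kloc : forall u z, In u D -> In z Z -> exists o : Aut lt, K z (ap o z) /\ ap o u = f u).
  { intros u z hu hz. destruct (hloc u hu) as [o [ho e]]. exists o. split; auto.
    apply (ho (z, K z)), in_map_iff. eauto. }
  destruct (choice_on (fun z cz => K z cz /\ forall u, In u D ->
             (lt u z -> lt (f u) cz) /\ (lt z u -> lt cz (f u)) /\ (u = z -> f u = cz))
             (fun z => In z Z) (fun z => z)) as [c hc].
  { intros z hz. destruct (classic (In z D)) as [zD|zD].
    - exists (f z). split.
      + destruct (Kloc z z zD hz) as [o [ho e]]. rewrite <- e. auto.
      + intros u hu. split; [|split]; [apply hord..|intros ->]; auto.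
    - destruct (convex_meets_gap (K z) z D f (fun u => lt u z) (fun u => lt z u) (Kconv z) (Kz z))
        as [cz [hcz [h1 h2]]].
      + intros u hu h. destruct (Kloc u z hu hz) as [o [ho e]]. exists (ap o z).
        split; auto. rewrite <- e. apply ap_lt; auto.
      + intros u hu h. destruct (Kloc u z hu hz) as [o [ho e]]. exists (ap o z).
        split; auto. rewrite <- e. apply ap_lt; auto.
      + intros u v hu hv2 h h'. apply (hord u v hu hv2). eapply lt_trans; eauto.
      + exists cz. split; auto. intros u hu. split; [|split]; auto. intros ->; contradiction. }
  destruct (order_embedding_extends_glue f c D Z) as [o [oD oZ]]; auto.
  - intros z1 z2 h1 h2. apply (lt_iff_of_mono z1 z2 (c z1) (c z2)); [| |intros ->; auto]; intros h.
    + exact (Kord z1 z2 _ _ h1 h2 h (proj1 (hc z1 h1)) (proj1 (hc z2 h2))).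
    + exact (Kord z2 z1 _ _ h2 h1 h (proj1 (hc z2 h2)) (proj1 (hc z1 h1))).
  - intros u z hu hz. destruct (proj2 (hc z hz) u hu) as [k1 [k2 k3]]. apply lt_iff_of_mono; auto.
  - intros z hz hzD. apply (hc z hz); auto.
  - exists o. split; auto. intros p hp. apply Ksub; auto.
    rewrite oZ by (apply in_map; auto). apply hc, in_map; auto.
Qed.

Theorem RK_pointwise_orbit : same_unif (RK lt) (pointwise_unif orbit_unif).
Proof.
  intros E. split.
  - intros [O [xs [hO hE]]]. apply ptop_nbhd_basic in hO. destruct hO as [l [hl hlO]].
    destruct (basic_nbhd_glue l hl) as [l' [hl' hglue]].
    exists xs, (fun y y' => exists o, basic_nbhd l' o /\ y' = ap o y). split.
    { apply orbit_unif_basic. exists l'. split; auto. intros o x ho. eauto. }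
    intros h1 h2 H.
    destruct (hglue (map (ap h1) xs) (fun u => ap h2 (inv_fn h1 u))) as [o [ho ho']].
    + intros u v hu hv. apply in_map_iff in hu, hv.
      destruct hu as [x [<- _]], hv as [y [<- _]].
      rewrite !inv_fn_ap, <- (ap_lt h1), <- (ap_lt h2). tauto.
    + intros u hu. apply in_map_iff in hu. destruct hu as [x [<- hx]].
      destruct (H x hx) as [o [ho e]]. exists o. split; auto. rewrite inv_fn_ap. auto.
    + (* h1 = id h1 id and h2 = o h1 s, where s = h1^-1 o^-1 h2 fixes xs *)
      apply hE. exists h1. split.
      * exists id_aut, id_aut. split; [apply hlO, basic_nbhd_id; auto|split; auto].
      * exists o, (comp_aut (inv_aut h1) (comp_aut (inv_aut o) h2)).
        split; [apply hlO; auto|split].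
        -- intros x hx. specialize (ho' (ap h1 x) ltac:(apply in_map; auto)).
           rewrite inv_fn_ap in ho'. rewrite !ap_comp, !ap_inv, <- ho', !inv_fn_ap. auto.
        -- intros x. rewrite !ap_comp, !ap_inv, !ap_inv_fn. auto.
  - intros [xs [F [hF hE]]].
    destruct (unif_sym_half _ _ orbit_unif_is_unif F hF) as [F1 [hF1 [s1 c1]]].
    apply orbit_unif_basic in hF1. destruct hF1 as [l1 [hl1 h1]].
    exists (basic_nbhd l1), xs. split; [apply ptop_nbhd_basic; exists l1; auto|].
    intros k1 k2 [g [[o1 [t1 [ho1 [ht1 e1]]]] [o2 [t2 [ho2 [ht2 e2]]]]]].
    apply hE. intros x hx. rewrite e1, e2, ht1, ht2; auto.
    eapply c1; [apply s1, h1|apply h1]; auto.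
Qed.

Lemma RK_pointwise_max UXp : max_equiunif lt (order_top lt) (ptop lt) UXp ->
  same_unif (RK lt) (pointwise_unif UXp).
Proof.
  intros hmax. apply (same_unif_trans _ _ _ RK_pointwise_orbit), pointwise_unif_same.
  apply same_unif_sym, max_equiunif_orbit_unif; auto.
Qed.

(** * Points of the completion of a dense chain *)

Section OneSidedLimits.
Hypothesis Hdense : forall x y, lt x y -> exists c, lt x c /\ lt c y.
Hypothesis Hnomax : forall x, exists y, lt x y.
Hypothesis Hnomin : forall x, exists y, lt y x.
Variable x0 : X.

Definition atmost (z : X) (p : option X) : Prop :=
  match p with None => False | Some x => z = x \/ lt z x end.
Definition atleast (z : X) (q : option X) : Prop :=
  match q with None => False | Some x => z = x \/ lt x z end.

Lemma atmost_above z p t : atmost z p -> above p t -> lt z t.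
Proof. destruct p as [x|]; simpl; [|tauto]. intros [<-|h] h'; auto. eapply lt_trans; eauto. Qed.
Lemma atleast_below z q t : atleast z q -> below q t -> lt t z.
Proof. destruct q as [x|]; simpl; [|tauto]. intros [<-|h] h'; auto. eapply lt_trans; eauto. Qed.

Lemma above_lower_bound p u v : above p u -> above p v -> exists t, above p t /\ lt t u /\ lt t v.
Proof.
  intros hu hv.
  assert (exists w, above p w /\ (w = u \/ lt w u) /\ (w = v \/ lt w v)) as [w [hw [h1 h2]]].
  { destruct (lt_total u v) as [h|[<-|h]]; [exists u|exists u|exists v]; auto. }
  assert (exists t, above p t /\ lt t w) as [t [ht htw]].
  { destruct p as [x|]; simpl in *.
    - destruct (Hdense x w hw) as [t [ht1 ht2]]. eauto.
    - destruct (Hnomin w) as [t ht]. eauto. }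
  exists t. split; [|split]; auto; eapply lt_le_trans; eauto.
Qed.

Lemma below_upper_bound q u v : below q u -> below q v -> exists t, below q t /\ lt u t /\ lt v t.
Proof.
  intros hu hv.
  assert (exists w, below q w /\ (u = w \/ lt u w) /\ (v = w \/ lt v w)) as [w [hw [h1 h2]]].
  { destruct (lt_total u v) as [h|[<-|h]]; [exists v|exists u|exists u]; auto. }
  assert (exists t, below q t /\ lt w t) as [t [ht htw]].
  { destruct q as [x|]; simpl in *.
    - destruct (Hdense w x hw) as [t [ht1 ht2]]. eauto.
    - destruct (Hnomax w) as [t ht]. eauto. }
  exists t. split; [|split]; auto; eapply le_lt_trans; eauto.
Qed.

Lemma gap_above p zs : exists v, above p v /\ forall z, In z zs -> atmost z p \/ v = z \/ lt v z.
Proof.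
  induction zs as [|z zs IH].
  - destruct p as [x|]; simpl.
    + destruct (Hnomax x) as [v hv]. exists v; split; [auto|intros z []].
    + exists x0. split; [simpl; auto|intros z []].
  - destruct IH as [v [hv H]].
    destruct (classic (atmost z p)) as [hz|hz]; [exists v; split; auto; intros z' [<-|h]; auto|].
    destruct (classic (lt z v)) as [hzv|hzv].
    + exists z. split.
      * destruct p as [x|]; simpl in *; auto.
        destruct (lt_total x z) as [h|[h|h]]; auto; exfalso; apply hz; auto.
      * intros z' [<-|h]; auto. destruct (H z' h) as [h'|[<-|h']]; auto.
        right; right. eapply lt_trans; eauto.
    + exists v. split; auto. intros z' [<-|h]; auto.
      destruct (lt_total z v) as [h'|[h'|h']]; [contradiction|auto|auto].
Qed.

Lemma gap_below q zs : exists v, below q v /\ forall z, In z zs -> atleast z q \/ v = z \/ lt z v.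
Proof.
  induction zs as [|z zs IH].
  - destruct q as [x|]; simpl.
    + destruct (Hnomin x) as [v hv]. exists v; split; [auto|intros z []].
    + exists x0. split; [simpl; auto|intros z []].
  - destruct IH as [v [hv H]].
    destruct (classic (atleast z q)) as [hz|hz]; [exists v; split; auto; intros z' [<-|h]; auto|].
    destruct (classic (lt v z)) as [hzv|hzv].
    + exists z. split.
      * destruct q as [x|]; simpl in *; auto.
        destruct (lt_total x z) as [h|[h|h]]; auto; exfalso; apply hz; auto.
      * intros z' [<-|h]; auto. destruct (H z' h) as [h'|[<-|h']]; auto.
        right; right. eapply lt_trans; eauto.
    + exists v. split; auto. intros z' [<-|h]; auto.
      destruct (lt_total z v) as [h'|[h'|h']]; [auto|auto|contradiction].
Qed.

Variable B : Type.
Variable V : unif X.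
Variable UB : unif B.
Variable e : X -> B.
Hypothesis Hc : is_completion V UB e.
Hypothesis Hblocks : forall F, V F -> exists zs, forall a b, same_block lt zs a b -> F a b.

(* [None] stands for the bottom end of the chain in [right_limit] and for its top end in
   [left_limit] *)
Definition right_limit (p : option X) (b : B) : Prop :=
  forall F, UB F -> exists u, above p u /\ forall y, above p y -> lt y u -> F b (e y).
Definition left_limit (q : option X) (b : B) : Prop :=
  forall F, UB F -> exists u, below q u /\ forall y, lt u y -> below q y -> F b (e y).

Lemma right_limits_close F : UB F -> exists zs, forall p p' b b',
  (forall z, In z zs -> (atmost z p <-> atmost z p')) ->
  right_limit p b -> right_limit p' b' -> F b b'.
Proof.
  intros hF. pose proof (completion_unif _ _ _ _ _ Hc) as HB.
  destruct (unif_sym_third _ _ HB F hF) as [F1 [hF1 [s1 c1]]].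
  destruct (Hblocks _ (completion_pullback _ _ _ _ _ Hc F1 hF1)) as [zs hzs].
  exists zs. intros p p' b b' hpp' hb hb'.
  destruct (hb F1 hF1) as [u [hu hu']]. destruct (hb' F1 hF1) as [u' [hu2 hu2']].
  destruct (gap_above p zs) as [v [hv hv']]. destruct (gap_above p' zs) as [v' [hv2 hv2']].
  destruct (above_lower_bound p u v hu hv) as [t [ht [ht1 ht2]]].
  destruct (above_lower_bound p' u' v' hu2 hv2) as [t' [ht' [ht1' ht2']]].
  apply (c1 b (e t) (e t') b'); [apply hu'; auto| |apply s1; apply hu2'; auto].
  apply hzs, same_block_of_sides. intros z hz.
  destruct (classic (atmost z p)) as [hl|hl].
  - right. split; [exact (atmost_above z p t hl ht)|].
    exact (atmost_above z p' t' (proj1 (hpp' z hz) hl) ht').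
  - left. assert (hl' : ~ atmost z p') by (rewrite <- hpp'; auto).
    split; [destruct (hv' z hz) as [?|?]|destruct (hv2' z hz) as [?|?]];
      try contradiction; eapply lt_le_trans; eauto.
Qed.

Lemma left_limits_close F : UB F -> exists zs, forall q q' b b',
  (forall z, In z zs -> (atleast z q <-> atleast z q')) ->
  left_limit q b -> left_limit q' b' -> F b b'.
Proof.
  intros hF. pose proof (completion_unif _ _ _ _ _ Hc) as HB.
  destruct (unif_sym_third _ _ HB F hF) as [F1 [hF1 [s1 c1]]].
  destruct (Hblocks _ (completion_pullback _ _ _ _ _ Hc F1 hF1)) as [zs hzs].
  exists zs. intros q q' b b' hqq' hb hb'.
  destruct (hb F1 hF1) as [u [hu hu']]. destruct (hb' F1 hF1) as [u' [hu2 hu2']].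
  destruct (gap_below q zs) as [v [hv hv']]. destruct (gap_below q' zs) as [v' [hv2 hv2']].
  destruct (below_upper_bound q u v hu hv) as [t [ht [ht1 ht2]]].
  destruct (below_upper_bound q' u' v' hu2 hv2) as [t' [ht' [ht1' ht2']]].
  apply (c1 b (e t) (e t') b'); [apply hu'; auto| |apply s1; apply hu2'; auto].
  apply hzs, same_block_of_sides. intros z hz.
  destruct (classic (atleast z q)) as [hl|hl].
  - left. split; [exact (atleast_below z q t hl ht)|].
    exact (atleast_below z q' t' (proj1 (hqq' z hz) hl) ht').
  - right. assert (hl' : ~ atleast z q') by (rewrite <- hqq'; auto).
    split; [destruct (hv' z hz) as [?|[<-|?]]|destruct (hv2' z hz) as [?|[<-|?]]];
      try contradiction; eauto; eapply lt_trans; eauto.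
Qed.

Lemma right_limit_aut (g : Aut lt) (psi : B -> B) p b :
  (forall x, psi (e x) = e (ap g x)) ->
  (forall A, unif_open UB A -> unif_open UB (fun b => A (psi b))) ->
  right_limit p b -> right_limit (option_map (ap g) p) (psi b).
Proof.
  intros He Hcont hb F hF.
  destruct (continuous_unif_ball _ _ (completion_unif _ _ _ _ _ Hc) psi Hcont b F hF)
    as [F' [hF' h']].
  destruct (hb F' hF') as [u [hu hu']]. exists (ap g u). split.
  - destruct p; simpl in *; auto. apply ap_lt; auto.
  - intros y hy hyu. destruct (ap_surj g y) as [y0 <-]. rewrite <- He. apply h', hu'.
    + destruct p; simpl in *; auto. apply (ap_lt g); auto.
    + apply (ap_lt g); auto.
Qed.

Lemma left_limit_aut (g : Aut lt) (psi : B -> B) q b :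
  (forall x, psi (e x) = e (ap g x)) ->
  (forall A, unif_open UB A -> unif_open UB (fun b => A (psi b))) ->
  left_limit q b -> left_limit (option_map (ap g) q) (psi b).
Proof.
  intros He Hcont hb F hF.
  destruct (continuous_unif_ball _ _ (completion_unif _ _ _ _ _ Hc) psi Hcont b F hF)
    as [F' [hF' h']].
  destruct (hb F' hF') as [u [hu hu']]. exists (ap g u). split.
  - destruct q; simpl in *; auto. apply ap_lt; auto.
  - intros y hyu hy. destruct (ap_surj g y) as [y0 <-]. rewrite <- He. apply h', hu'.
    + apply (ap_lt g); auto.
    + destruct q; simpl in *; auto. apply (ap_lt g); auto.
Qed.

Section Classification.
Variable b : B.

Definition near (A : X -> Prop) : Prop := exists F, UB F /\ forall y, F b (e y) -> A y.
Definition eventually_above (w : X) : Prop := near (fun t => lt w t).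

Lemma near_sup A A' : near A -> (forall y, A y -> A' y) -> near A'.
Proof. intros [F [hF h]] h'. exists F; split; auto. Qed.

Lemma near_cap A A' : near A -> near A' -> near (fun y => A y /\ A' y).
Proof.
  intros [F [hF h]] [F' [hF' h']]. exists (fun a c => F a c /\ F' a c).
  split; [apply unif_cap; auto; apply (completion_unif _ _ _ _ _ Hc)|]. intros y [? ?]; auto.
Qed.

Lemma near_ball F : UB F -> near (fun t => F b (e t)).
Proof. intros h. exists F. split; auto. Qed.

Lemma not_eventually_above w S : ~ eventually_above w -> near S -> exists t, S t /\ ~ lt w t.
Proof.
  intros hw hS. apply NNPP. intros hn. apply hw. eapply near_sup; [exact hS|].
  intros t ht. apply NNPP. intros h'. apply hn. eauto.
Qed.

Lemma near_blocks F : UB F -> exists F1, UB F1 /\ exists zs, forall t y,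
  F1 b (e t) -> same_block lt zs t y -> F b (e y).
Proof.
  intros hF. destruct (unif_sym_half _ _ (completion_unif _ _ _ _ _ Hc) F hF) as [F1 [hF1 [s1 c1]]].
  destruct (Hblocks _ (completion_pullback _ _ _ _ _ Hc F1 hF1)) as [zs hzs].
  exists F1. split; auto. exists zs. intros t y h1 h2. eapply c1; [exact h1|]. apply hzs; auto.
Qed.

Lemma right_limit_of_greatest m : eventually_above m ->
  (forall w, eventually_above w -> w = m \/ lt w m) -> right_limit (Some m) b.
Proof.
  intros hm hm' F hF. destruct (near_blocks F hF) as [F1 [hF1 [zs hzs]]].
  destruct (gap_above (Some m) zs) as [v [hv hv']]. simpl in hv.
  destruct (Hdense m v hv) as [w [hw1 hw2]].
  assert (nw : ~ eventually_above w)
    by (intros h; destruct (hm' w h) as [->|h']; [eapply lt_irrefl|eapply lt_asym]; eauto).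
  destruct (not_eventually_above w _ nw (near_cap _ _ (near_ball F1 hF1) hm))
    as [t [[ht1 ht2] ht3]].
  apply not_lt_le in ht3.
  exists v. split; [simpl; auto|]. intros y hy hyv. simpl in hy. apply (hzs t y ht1).
  apply same_block_of_sides. intros z hz. destruct (hv' z hz) as [h|h].
  - right. simpl in h. split; eapply le_lt_trans; eauto.
  - left. split; eapply lt_le_trans; eauto. eapply le_lt_trans; eauto.
Qed.

Lemma point_or_left_limit_of_least m : ~ eventually_above m ->
  (forall w, ~ eventually_above w -> w = m \/ lt m w) -> b = e m \/ left_limit (Some m) b.
Proof.
  intros hm hm'. pose proof (completion_unif _ _ _ _ _ Hc) as HB.
  assert (below_m : forall y, lt y m -> eventually_above y).
  { intros y hy. apply NNPP. intros h.
    destruct (hm' y h) as [->|h']; [eapply lt_irrefl|eapply lt_asym]; eauto. }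
  (* b = e m exactly when some neighbourhood of b misses a left interval at m *)
  destruct (classic (exists F0, UB F0 /\ exists y0, lt y0 m /\
              forall t, lt y0 t -> lt t m -> ~ F0 b (e t))) as [[F0 [hF0 [y0 [hy0 hy0']]]]|nF].
  - left. apply (completion_separated _ _ _ _ _ Hc). intros F hF.
    destruct (not_eventually_above m _ hm
                (near_cap _ _ (near_ball _ (unif_cap _ _ HB _ _ hF hF0)) (below_m y0 hy0)))
      as [t [[[ht1 ht2] ht3] ht4]].
    apply not_lt_le in ht4. destruct ht4 as [<-|ht4]; auto. exfalso. eapply hy0'; eauto.
  - right. intros F hF. destruct (near_blocks F hF) as [F1 [hF1 [zs hzs]]].
    destruct (gap_below (Some m) zs) as [v [hv hv']]. simpl in hv.
    assert (ht : exists t, lt v t /\ lt t m /\ F1 b (e t)).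
    { apply NNPP. intros hn. apply nF. exists F1. split; auto. exists v. split; auto.
      intros t h1 h2 h3. apply hn. eauto. }
    destruct ht as [t [ht1 [ht2 ht3]]].
    exists v. split; [simpl; auto|]. intros y hyv hy. simpl in hy. apply (hzs t y ht3).
    apply same_block_of_sides. intros z hz. destruct (hv' z hz) as [h|h].
    + left. simpl in h. split; eapply lt_le_trans; eauto; destruct h as [<-|h]; auto.
    + right. destruct h as [<-|h]; split; auto; eapply lt_trans; eauto.
Qed.

Lemma right_limit_bottom : (forall w, ~ eventually_above w) -> right_limit None b.
Proof.
  intros na F hF. destruct (near_blocks F hF) as [F1 [hF1 [zs hzs]]].
  destruct (gap_above None zs) as [v [_ hv']]. destruct (Hnomin v) as [w hw].
  destruct (not_eventually_above w _ (na w) (near_ball F1 hF1)) as [t [ht1 ht2]].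
  apply not_lt_le in ht2.
  exists v. split; [simpl; auto|]. intros y _ hyv. apply (hzs t y ht1).
  apply same_block_of_sides. intros z hz. destruct (hv' z hz) as [[]|h].
  left. split; [eapply le_lt_trans; [exact ht2|]|]; eapply lt_le_trans; eauto.
Qed.

Lemma left_limit_top : (forall w, eventually_above w) -> left_limit None b.
Proof.
  intros hall F hF. destruct (near_blocks F hF) as [F1 [hF1 [zs hzs]]].
  destruct (gap_below None zs) as [v [_ hv']].
  destruct (near_cap _ _ (near_ball F1 hF1) (hall v)) as [F2 [hF2 hF2']].
  destruct (completion_dense _ _ _ _ _ Hc b F2 hF2) as [t ht]. destruct (hF2' t ht) as [ht1 ht2].
  exists v. split; [simpl; auto|]. intros y hyv _. apply (hzs t y ht1).
  apply same_block_of_sides. intros z hz. destruct (hv' z hz) as [[]|h].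
  right. destruct h as [<-|h]; split; auto; eapply lt_trans; eauto.
Qed.

Hypothesis Hcont : continuous_chain lt.

Theorem completion_point_cases : (exists x, b = e x) \/ (exists m, right_limit (Some m) b) \/
  (exists m, left_limit (Some m) b) \/ right_limit None b \/ left_limit None b.
Proof.
  destruct (classic (exists a, eventually_above a)) as [[a ha]|na];
    [|right; right; right; left; apply right_limit_bottom; eauto].
  destruct (classic (exists c, ~ eventually_above c)) as [[c hc]|nc];
    [|right; right; right; right; apply left_limit_top; intros w; apply NNPP; eauto].
  destruct (Hcont eventually_above (fun y => ~ eventually_above y)) as [[m [hm hm']]|[m [hm hm']]];
    eauto.
  - intros x. apply classic.
  - intros a' c' ha' hc'. destruct (lt_total a' c') as [?|[<-|?]]; auto; exfalso; apply hc'; auto.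
    eapply near_sup; [exact ha'|]. intros t ht. eapply lt_trans; eauto.
  - right; left. exists m. apply right_limit_of_greatest; auto.
  - destruct (point_or_left_limit_of_least m hm hm') as [->|?]; eauto.
Qed.

End Classification.

Lemma right_limit_at_point m b :
  (forall F, V F -> exists u, lt m u /\ forall y, lt m y -> lt y u -> F m y) ->
  right_limit (Some m) b -> b = e m.
Proof.
  intros Hball hb. pose proof (completion_unif _ _ _ _ _ Hc) as HB.
  apply (completion_separated _ _ _ _ _ Hc). intros F hF.
  destruct (unif_sym_half _ _ HB F hF) as [F1 [hF1 [s1 c1]]].
  destruct (Hball _ (completion_pullback _ _ _ _ _ Hc F1 hF1)) as [u1 [hu1 hu1']].
  destruct (hb F1 hF1) as [u2 [hu2 hu2']].
  destruct (above_lower_bound (Some m) u1 u2 hu1 hu2) as [y [hy [h1 h2]]]. simpl in hy.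
  apply (c1 b (e y) (e m)); [apply hu2'; simpl; auto|apply s1, hu1'; auto].
Qed.

Lemma left_limit_at_point m b :
  (forall F, V F -> exists u, lt u m /\ forall y, lt u y -> lt y m -> F m y) ->
  left_limit (Some m) b -> b = e m.
Proof.
  intros Hball hb. pose proof (completion_unif _ _ _ _ _ Hc) as HB.
  apply (completion_separated _ _ _ _ _ Hc). intros F hF.
  destruct (unif_sym_half _ _ HB F hF) as [F1 [hF1 [s1 c1]]].
  destruct (Hball _ (completion_pullback _ _ _ _ _ Hc F1 hF1)) as [u1 [hu1 hu1']].
  destruct (hb F1 hF1) as [u2 [hu2 hu2']].
  destruct (below_upper_bound (Some m) u1 u2 hu1 hu2) as [y [hy [h1 h2]]]. simpl in hy.
  apply (c1 b (e y) (e m)); [apply hu2'; simpl; auto|apply s1, hu1'; auto].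
Qed.

Section Equicontinuity.
Variable ext : Aut lt -> B -> B.
Hypothesis Hext : ext_ok lt UB e ext.

Definition equicontinuous_at (b : B) : Prop :=
  forall F, UB F -> pointwise_unif V (fun g h => F (ext g b) (ext h b)).

Lemma equicontinuous_at_image x : equicontinuous_at (e x).
Proof.
  intros F hF. exists [x], (fun a c => F (e a) (e c)).
  split; [apply (completion_pullback _ _ _ _ _ Hc); auto|].
  intros g h H. rewrite (proj1 (Hext g) x), (proj1 (Hext h) x). apply H. simpl; auto.
Qed.

Lemma equicontinuous_at_bottom b : right_limit None b -> equicontinuous_at b.
Proof.
  intros hb F hF. destruct (right_limits_close F hF) as [zs hzs].
  apply pointwise_unif_trivial; [apply (completion_source_unif _ _ _ Hc)|]. intros g h.
  apply (hzs None None); [simpl; tauto| |].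
  - exact (right_limit_aut g (ext g) None b (proj1 (Hext g)) (proj2 (Hext g)) hb).
  - exact (right_limit_aut h (ext h) None b (proj1 (Hext h)) (proj2 (Hext h)) hb).
Qed.

Lemma equicontinuous_at_top b : left_limit None b -> equicontinuous_at b.
Proof.
  intros hb F hF. destruct (left_limits_close F hF) as [zs hzs].
  apply pointwise_unif_trivial; [apply (completion_source_unif _ _ _ Hc)|]. intros g h.
  apply (hzs None None); [simpl; tauto| |].
  - exact (left_limit_aut g (ext g) None b (proj1 (Hext g)) (proj2 (Hext g)) hb).
  - exact (left_limit_aut h (ext h) None b (proj1 (Hext h)) (proj2 (Hext h)) hb).
Qed.

Lemma equicontinuous_at_right_limit m b : (forall zs, V (same_block lt zs)) ->
  right_limit (Some m) b -> equicontinuous_at b.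
Proof.
  intros HV hb F hF. destruct (right_limits_close F hF) as [zs hzs].
  exists [m], (same_block lt zs). split; auto. intros g h H.
  apply (hzs (Some (ap g m)) (Some (ap h m))).
  - intros z hz. pose proof (H m (or_introl eq_refl)) as Hm. simpl.
    destruct (Hm z hz) as [e1 _]. pose proof (same_block_gt zs _ _ z Hm hz) as e2.
    split; intros [E|E]; [left|right|left|right]; try (apply e2; auto; fail);
      symmetry; apply e1; auto.
  - exact (right_limit_aut g (ext g) (Some m) b (proj1 (Hext g)) (proj2 (Hext g)) hb).
  - exact (right_limit_aut h (ext h) (Some m) b (proj1 (Hext h)) (proj2 (Hext h)) hb).
Qed.

Lemma equicontinuous_at_left_limit m b : (forall zs, V (same_block lt zs)) ->
  left_limit (Some m) b -> equicontinuous_at b.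
Proof.
  intros HV hb F hF. destruct (left_limits_close F hF) as [zs hzs].
  exists [m], (same_block lt zs). split; auto. intros g h H.
  apply (hzs (Some (ap g m)) (Some (ap h m))).
  - intros z hz. destruct (H m (or_introl eq_refl) z hz) as [e1 e2]. simpl.
    split; intros [E|E]; [left|right|left|right]; try (apply e2; auto; fail);
      symmetry; apply e1; auto.
  - exact (left_limit_aut g (ext g) (Some m) b (proj1 (Hext g)) (proj2 (Hext g)) hb).
  - exact (left_limit_aut h (ext h) (Some m) b (proj1 (Hext h)) (proj2 (Hext h)) hb).
Qed.

Hypothesis Hcont : continuous_chain lt.

Theorem equicontinuous_everywhere :
  (forall m b, right_limit (Some m) b -> equicontinuous_at b) ->
  (forall m b, left_limit (Some m) b -> equicontinuous_at b) ->
  forall b, equicontinuous_at b.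
Proof.
  intros Hr Hl b.
  destruct (completion_point_cases b Hcont) as [[x ->]|[[m hm]|[[m hm]|[hm|hm]]]]; eauto.
  - apply equicontinuous_at_image.
  - apply equicontinuous_at_bottom; auto.
  - apply equicontinuous_at_top; auto.
Qed.

Theorem equicontinuous_of_blocks :
  (forall zs, V (same_block lt zs)) -> forall b, equicontinuous_at b.
Proof.
  intros HV. apply equicontinuous_everywhere; auto; intros m b.
  - apply equicontinuous_at_right_limit; auto.
  - apply equicontinuous_at_left_limit; auto.
Qed.

Theorem equicontinuous_of_interval_balls :
  (forall F x, V F -> exists u, lt x u /\ forall y, lt x y -> lt y u -> F x y) ->
  (forall F x, V F -> exists u, lt u x /\ forall y, lt u y -> lt y x -> F x y) ->
  forall b, equicontinuous_at b.
Proof.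
  intros Hr Hl. apply equicontinuous_everywhere; auto; intros m b hb.
  - rewrite (right_limit_at_point m b); [apply equicontinuous_at_image|auto|auto].
  - rewrite (left_limit_at_point m b); [apply equicontinuous_at_image|auto|auto].
Qed.

End Equicontinuity.
End OneSidedLimits.

(** * Enveloping semigroups *)

Lemma equicontinuous_trivial B V UB (ext : Aut lt -> B -> B) b : is_unif V -> is_unif UB ->
  ~ nontrivial -> equicontinuous_at B V UB ext b.
Proof.
  intros HV HB nt F hF. apply pointwise_unif_trivial; auto. intros g h.
  rewrite (trivial_aut_unique nt g h). apply (unif_refl _ _ HB F hF).
Qed.

Section EllisSemigroup.
Hypothesis Hcont : continuous_chain lt.

Theorem roelcke_ellis_closure :
  forall (B : Type) (UB : unif B) (e : X -> B), is_completion (UXd lt) UB e ->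
    (exists ext, ext_ok lt UB e ext) /\
    forall ext, ext_ok lt UB e ext ->
      completion_is_closure (roelcke_unif (perm_top lt)) (@prod_unif B B UB) ext.
Proof.
  intros B UB e Hc. split; [apply (ext_ok_exists _ _ _ _ Hc), UXd_saturated|].
  intros ext Hext.
  apply (ellis_closure_of_equicontinuous _ _ _ _ Hc _ (roelcke_pointwise_UXd) ext Hext).
  intros b. destruct (classic nontrivial) as [nt|nt].
  - pose proof nt as [x0 _].
    apply (equicontinuous_of_blocks (lt_dense) (no_greatest nt) (no_least nt) x0
             _ _ _ _ Hc (fun F hF => hF) ext Hext Hcont).
    intros zs. exists zs. auto.
  - apply equicontinuous_trivial; auto; [apply UXd_is_unif|apply (completion_unif _ _ _ _ _ Hc)].
Qed.

Theorem RK_ellis_closure :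
  forall UXp, max_equiunif lt (order_top lt) (ptop lt) UXp ->
  forall (B : Type) (UB : unif B) (e : X -> B), is_completion UXp UB e ->
    (exists ext, ext_ok lt UB e ext) /\
    forall ext, ext_ok lt UB e ext -> completion_is_closure (RK lt) (@prod_unif B B UB) ext.
Proof.
  intros UXp hmax B UB e Hc.
  pose proof (max_equiunif_orbit_unif UXp hmax) as HV.
  split; [apply (ext_ok_exists _ _ _ _ Hc); intros g E; apply hmax|].
  intros ext Hext.
  apply (ellis_closure_of_equicontinuous _ _ _ _ Hc _ (RK_pointwise_max UXp hmax) ext Hext).
  intros b. destruct (classic nontrivial) as [nt|nt].
  - pose proof nt as [x0 _].
    assert (Hblocks : forall F, UXp F -> exists zs, forall a b, same_block lt zs a b -> F a b)
      by (intros F hF; apply (orbit_unif_blocks), HV; auto).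
    apply (equicontinuous_of_interval_balls (lt_dense) (no_greatest nt) (no_least nt) x0
             _ _ _ _ Hc Hblocks ext Hext Hcont); intros F x hF;
      [apply (orbit_unif_right_interval)|apply (orbit_unif_left_interval)]; auto;
      apply HV; auto.
  - apply equicontinuous_trivial; auto; [apply hmax|apply (completion_unif _ _ _ _ _ Hc)].
Qed.

End EllisSemigroup.

End Chain.

Theorem corollary4p3 (X : Type) (lt : X -> X -> Prop)
  (Hchain : is_chain lt) (Hultra : ultrahomogeneous lt) :
  (* (1.1) *)
  (same_unif (roelcke_unif (perm_top lt)) (UG lt (UXd lt)) /\
   forall (Bd : Type) (UBd : unif Bd) (ed : X -> Bd),
     is_completion (UXd lt) UBd ed ->
     completion_is_closure (roelcke_unif (perm_top lt)) (@prod_unif X Bd UBd)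
       (fun g x => ed (ap g x))) /\
  (* (1.2) *)
  ((exists UXp, max_equiunif lt (order_top lt) (ptop lt) UXp) /\
   forall UXp, max_equiunif lt (order_top lt) (ptop lt) UXp ->
     same_unif (RK lt) (UG lt UXp) /\
     forall (Bp : Type) (UBp : unif Bp) (ep : X -> Bp),
       is_completion UXp UBp ep ->
       completion_is_closure (RK lt) (@prod_unif X Bp UBp) (fun g x => ep (ap g x))) /\
  (continuous_chain lt ->
   (* (2.1) *)
   (forall (Bd : Type) (UBd : unif Bd) (ed : X -> Bd),
      is_completion (UXd lt) UBd ed ->
      (exists ext, ext_ok lt UBd ed ext) /\
      forall ext, ext_ok lt UBd ed ext ->
        completion_is_closure (roelcke_unif (perm_top lt)) (@prod_unif Bd Bd UBd) ext) /\
   (* (2.2) *)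
   (forall UXp, max_equiunif lt (order_top lt) (ptop lt) UXp ->
    forall (Bp : Type) (UBp : unif Bp) (ep : X -> Bp),
      is_completion UXp UBp ep ->
      (exists ext, ext_ok lt UBp ep ext) /\
      forall ext, ext_ok lt UBp ep ext ->
        completion_is_closure (RK lt) (@prod_unif Bp Bp UBp) ext)).
Proof.
  pose proof (roelcke_pointwise_UXd X lt Hchain Hultra) as Hroelcke.
  split; [split|split; [split|intros Hcont; split]].
  - apply (same_unif_trans _ _ _ Hroelcke), same_unif_sym, UG_pointwise_unif, UXd_is_unif.
  - intros Bd UBd ed Hc. exact (prod_closure_of_pointwise X lt _ _ _ _ Hc _ Hroelcke).
  - exists (orbit_unif X lt). apply orbit_unif_max; auto.
  - intros UXp hmax. pose proof (RK_pointwise_max X lt Hchain Hultra UXp hmax) as HRK. split.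
    + apply (same_unif_trans _ _ _ HRK), same_unif_sym, UG_pointwise_unif, hmax.
    + intros Bp UBp ep Hc. exact (prod_closure_of_pointwise X lt _ _ _ _ Hc _ HRK).
  - apply roelcke_ellis_closure; auto.
  - apply RK_ellis_closure; auto.
Qed.
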